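(* Let $c:I\to\mathbb{L}^3$ ($I\subset\mathbb{R}$ an open interval) be a regular real analytic curve which is spacelike or timelike, and let $n:I\to\mathbb{L}^3$ be a real analytic spacelike unit normal vector field along $c$ (i.e. $\langle n,n\rangle=1$ and $\langle n(t),c'(t)\rangle=0$). Then there exists a Born-Infeld soliton general surface which solves the Björling problem for $(c,n)$, i.e. a Born-Infeld soliton general surface $X:\Omega\to\mathbb{L}^3$, with $\Omega\subset\mathbb{R}^2$ open containing $I\times\{0\}$, such that $X(t,0)=c(t)$ and the unit normal of $X$ satisfies $N(t,0)=n(t)$ for all $t\in I$.
   Context: $\mathbb{L}^3$ denotes $\mathbb{R}^3$ with the metric $\langle\cdot,\cdot\rangle$ given by $ds^2=dx^2+dy^2-dz^2$. A function $\psi$ on an open set of the $(u,v)$-plane is a Born-Infeld soliton (in the variables $u,v$) if $(1-\psi_v^2)\psi_{uu}+2\psi_u\psi_v\psi_{uv}-(1+\psi_u^2)\psi_{vv}=0$. A surface is a Born-Infeld soliton general surface if it is locally of the form $(\psi(y,z),y,z)$, $(x,\psi(x,z),z)$ or $(x,y,\psi(x,y))$ where $\psi$ solves the Born-Infeld equation (in the respective pair of variables). *)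

From Stdlib Require Import Reals.
From Coquelicot Require Import Coquelicot.
Open Scope R_scope.

Definition V3 : Type := (R * R * R)%type.
Definition vx (p : V3) : R := fst (fst p).
Definition vy (p : V3) : R := snd (fst p).
Definition vz (p : V3) : R := snd p.
Definition mk3 (a b c : R) : V3 := (a, b, c).

Definition lprod (p q : V3) : R := vx p * vx q + vy p * vy q - vz p * vz q.

Definition in_interval (a b : Rbar) (t : R) : Prop := Rbar_lt a t /\ Rbar_lt t b.

Definition analytic_at (f : R -> R) (t0 : R) : Prop :=
  exists r : R, 0 < r /\ exists coef : nat -> R,
    forall t, Rabs (t - t0) < r -> is_pseries coef (t - t0) (f t).

Definition analytic_on (I : R -> Prop) (f : R -> R) : Prop :=
  forall t, I t -> analytic_at f t.

Definition analytic_curve (I : R -> Prop) (c : R -> V3) : Prop :=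
  analytic_on I (fun t => vx (c t)) /\ analytic_on I (fun t => vy (c t)) /\
  analytic_on I (fun t => vz (c t)).

Definition dcurve (c : R -> V3) (t : R) : V3 :=
  mk3 (Derive (fun s => vx (c s)) t) (Derive (fun s => vy (c s)) t)
      (Derive (fun s => vz (c s)) t).

Definition open2 (O : R -> R -> Prop) : Prop :=
  forall u v, O u v -> exists e : R, 0 < e /\
    forall u' v', Rabs (u' - u) < e -> Rabs (v' - v) < e -> O u' v'.

Definition pu (f : R -> R -> R) (u v : R) : R := Derive (fun s => f s v) u.
Definition pv (f : R -> R -> R) (u v : R) : R := Derive (fun s => f u s) v.

Definition C1_on (O : R -> R -> Prop) (f : R -> R -> R) : Prop :=
  forall u v, O u v ->
    ex_derive (fun s => f s v) u /\ ex_derive (fun s => f u s) v /\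
    continuous (fun p : R * R => pu f (fst p) (snd p)) (u, v) /\
    continuous (fun p : R * R => pv f (fst p) (snd p)) (u, v).

Definition C2_on (O : R -> R -> Prop) (f : R -> R -> R) : Prop :=
  C1_on O f /\ C1_on O (pu f) /\ C1_on O (pv f).

Definition BI_soliton (D : R -> R -> Prop) (psi : R -> R -> R) : Prop :=
  open2 D /\ C2_on D psi /\
  forall u v, D u v ->
    (1 - (pv psi u v) ^ 2) * pu (pu psi) u v
    + 2 * pu psi u v * pv psi u v * pv (pu psi) u v
    - (1 + (pu psi u v) ^ 2) * pv (pv psi) u v = 0.

Definition Xu (X : R -> R -> V3) (u v : R) : V3 :=
  mk3 (pu (fun a b => vx (X a b)) u v) (pu (fun a b => vy (X a b)) u v)
      (pu (fun a b => vz (X a b)) u v).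
Definition Xv (X : R -> R -> V3) (u v : R) : V3 :=
  mk3 (pv (fun a b => vx (X a b)) u v) (pv (fun a b => vy (X a b)) u v)
      (pv (fun a b => vz (X a b)) u v).

Definition regular_surface (O : R -> R -> Prop) (X : R -> R -> V3) : Prop :=
  open2 O /\
  C1_on O (fun a b => vx (X a b)) /\ C1_on O (fun a b => vy (X a b)) /\
  C1_on O (fun a b => vz (X a b)) /\
  forall u v, O u v -> forall al be : R,
    al * vx (Xu X u v) + be * vx (Xv X u v) = 0 ->
    al * vy (Xu X u v) + be * vy (Xv X u v) = 0 ->
    al * vz (Xu X u v) + be * vz (Xv X u v) = 0 ->
    al = 0 /\ be = 0.

Definition unit_normal_at (X : R -> R -> V3) (u v : R) (N : V3) : Prop :=
  lprod N N = 1 /\ lprod N (Xu X u v) = 0 /\ lprod N (Xv X u v) = 0.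

Definition on_graph_x (D : R -> R -> Prop) (psi : R -> R -> R) (p : V3) : Prop :=
  D (vy p) (vz p) /\ vx p = psi (vy p) (vz p).
Definition on_graph_y (D : R -> R -> Prop) (psi : R -> R -> R) (p : V3) : Prop :=
  D (vx p) (vz p) /\ vy p = psi (vx p) (vz p).
Definition on_graph_z (D : R -> R -> Prop) (psi : R -> R -> R) (p : V3) : Prop :=
  D (vx p) (vy p) /\ vz p = psi (vx p) (vy p).

Definition BI_general_surface (O : R -> R -> Prop) (X : R -> R -> V3) : Prop :=
  regular_surface O X /\
  forall u v, O u v -> exists e : R, 0 < e /\
    exists (D : R -> R -> Prop) (psi : R -> R -> R), BI_soliton D psi /\
      let nbhd := fun u' v' => O u' v' /\ Rabs (u' - u) < e /\ Rabs (v' - v) < e in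
      ((forall u' v', nbhd u' v' -> on_graph_x D psi (X u' v')) \/
       (forall u' v', nbhd u' v' -> on_graph_y D psi (X u' v')) \/
       (forall u' v', nbhd u' v' -> on_graph_z D psi (X u' v'))).

(* A translation surface X(u, w) = alpha(u) + beta(w) of two lightlike curves is, wherever
   its projection to the (y, z)-plane is a local diffeomorphism, a graph x = psi(y, z) with psi a
   Born-Infeld soliton: differentiating psi (alpha_y + beta_y, alpha_z + beta_z) = alpha_x + beta_x
   twice, the nullity of alpha' and beta' turns the Born-Infeld operator into zero (likewise for
   graphs y = psi(x, z)).

   For the Bjorling data (c, n) put m = n x c' (Lorentzian cross product).  Then <c', m> = 0 and
   <m, m> = - <c', c'>, so alpha' = (c' + m) / 2 and beta' = (c' - m) / 2 are lightlike, and
   X(s, t) = alpha(s + t) + beta(s - t) satisfies X(t, 0) = c(t), X_s = c', X_t = m along the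
   axis; hence n is its unit normal there.  As c' is not lightlike, either the (y, z)- or the
   (x, z)-projection of span (c', m) is nondegenerate, and an inverse function argument makes X
   locally a Born-Infeld graph.  Analyticity is only used for regularity. *)

From Stdlib Require Import Reals Lra Psatz ClassicalEpsilon.
From Coquelicot Require Import Coquelicot.
Open Scope R_scope.

Lemma continuous_div {U : UniformSpace} (f g : U -> R) x :
  continuous f x -> continuous g x -> g x <> 0 -> continuous (fun y => f y / g y) x.
Proof.
  intros Hf Hg Hg0. apply (continuous_mult f (fun y => / g y)); auto.
  apply (continuous_comp g Rinv); auto. apply continuous_Rinv; auto.
Qed.

Ltac continuous_step :=
  match goal with
  | |- continuous (fun _ => ?c) _ => apply continuous_const
  | |- continuous (fun p => @?f p + @?g p) _ => apply (continuous_plus f g)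
  | |- continuous (fun p => @?f p - @?g p) _ => apply (continuous_minus f g)
  | |- continuous (fun p => @?f p * @?g p) _ => apply (continuous_mult f g)
  | |- continuous (fun p => @?f p / @?g p) _ => apply (continuous_div f g)
  | |- continuous (fun p => - @?f p) _ => apply (continuous_opp f)
  end.

Ltac eta_Derive := repeat match goal with |- context [Derive (fun y => ?f y) ?x] =>
  change (Derive (fun y => f y) x) with (Derive f x) end.

Lemma continuous_fst_comp (f : R -> R) (p : R * R) :
  continuous f (fst p) -> continuous (fun q : R * R => f (fst q)) p.
Proof. intros H. apply (continuous_comp fst f); auto. apply continuous_fst. Qed.

Lemma continuous_snd_comp (f : R -> R) (p : R * R) :
  continuous f (snd p) -> continuous (fun q : R * R => f (snd q)) p.
Proof. intros H. apply (continuous_comp snd f); auto. apply continuous_snd. Qed.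

Lemma continuous_eps (f : R -> R) x : continuous f x ->
  forall e, 0 < e -> exists d, 0 < d /\ forall y, Rabs (y - x) < d -> Rabs (f y - f x) < e.
Proof.
  intros Hc e He.
  destruct (proj1 (filterlim_locally f (f x)) Hc (mkposreal e He)) as [d Hd].
  exists d; split; [apply cond_pos | intros y Hy; exact (Hd y Hy)].
Qed.

Lemma continuous2_eps (f : R * R -> R) x1 x2 : continuous f (x1, x2) ->
  forall e, 0 < e -> exists d, 0 < d /\ forall y1 y2,
    Rabs (y1 - x1) < d -> Rabs (y2 - x2) < d -> Rabs (f (y1, y2) - f (x1, x2)) < e.
Proof.
  intros Hc e He.
  destruct (proj1 (filterlim_locally f (f (x1, x2))) Hc (mkposreal e He)) as [d Hd].
  exists d; split; [apply cond_pos|]. intros y1 y2 H1 H2. apply (Hd (y1, y2)). split; assumption.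
Qed.

Lemma eps_continuous2 (f : R * R -> R) x1 x2 :
  (forall e, 0 < e -> exists d, 0 < d /\ forall y1 y2,
     Rabs (y1 - x1) < d -> Rabs (y2 - x2) < d -> Rabs (f (y1, y2) - f (x1, x2)) < e) ->
  continuous f (x1, x2).
Proof.
  intros H. apply (proj2 (filterlim_locally f (f (x1, x2)))).
  intros [e He]. destruct (H e He) as [d [Hd Hd']].
  exists (mkposreal d Hd). intros [y1 y2] [H1 H2]. apply Hd'; assumption.
Qed.

Lemma locally_of_ball (P : R -> Prop) x :
  (exists d, 0 < d /\ forall y, Rabs (y - x) < d -> P y) -> locally x P.
Proof. intros [d [Hd H]]. exists (mkposreal d Hd). exact H. Qed.

Lemma locally2_of_box (P : R -> R -> Prop) x y :
  (exists d, 0 < d /\ forall x' y', Rabs (x' - x) < d -> Rabs (y' - y) < d -> P x' y') ->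
  locally (x, y) (fun p : R * R => P (fst p) (snd p)).
Proof. intros [d [Hd H]]. exists (mkposreal d Hd). intros [x' y'] [H1 H2]. apply H; auto. Qed.

Lemma C1_on_of_partials (O : R -> R -> Prop) (f fu fv : R -> R -> R) : open2 O ->
  (forall y z, O y z ->
     is_derive (fun s => f s z) y (fu y z) /\ is_derive (fun s => f y s) z (fv y z)) ->
  (forall y z, O y z -> continuous (fun p : R * R => fu (fst p) (snd p)) (y, z) /\
     continuous (fun p : R * R => fv (fst p) (snd p)) (y, z)) ->
  C1_on O f /\ (forall y z, O y z -> pu f y z = fu y z /\ pv f y z = fv y z).
Proof.
  intros HO Hd Hc.
  assert (E : forall y z, O y z -> pu f y z = fu y z /\ pv f y z = fv y z)
    by (intros y z H; destruct (Hd y z H); split; apply is_derive_unique; assumption).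
  split; [|exact E]. intros y z H.
  destruct (Hd y z H) as [Dy Dz]. destruct (Hc y z H) as [Cy Cz]. destruct (HO y z H) as [d [Hd0 Hnear]].
  split; [eexists; exact Dy|]. split; [eexists; exact Dz|].
  split.
  - apply (continuous_ext_loc (fun p : R * R => pu f (fst p) (snd p)) (fun p : R * R => fu (fst p) (snd p)));
      [|exact Cy].
    apply (locally2_of_box (fun y' z' => fu y' z' = pu f y' z')).
    exists d; split; auto; intros y' z' h1 h2; symmetry; apply E, Hnear; auto.
  - apply (continuous_ext_loc (fun p : R * R => pv f (fst p) (snd p)) (fun p : R * R => fv (fst p) (snd p)));
      [|exact Cz].
    apply (locally2_of_box (fun y' z' => fv y' z' = pv f y' z')).
    exists d; split; auto; intros y' z' h1 h2; symmetry; apply E, Hnear; auto.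
Qed.

Lemma is_derive_eq (f : R -> R) x (l l' : R) : is_derive f x l -> @eq R l l' -> is_derive f x l'.
Proof. intros H <-; exact H. Qed.

Lemma Rabs_lin2 a b x y : Rabs (a * x + b * y) <= Rabs a * Rabs x + Rabs b * Rabs y.
Proof. eapply Rle_trans; [apply Rabs_triang|]. rewrite !Rabs_mult. lra. Qed.

Lemma Rabs_shift_lt x y z d e : Rabs (x - y) < d -> Rabs (y - z) <= e -> Rabs (x - z) < d + e.
Proof.
  intros H1 H2. replace (x - z) with ((x - y) + (y - z)) by ring.
  eapply Rle_lt_trans; [apply Rabs_triang | lra].
Qed.

Lemma Rabs_sum_diff_lt s t t0 rho : Rabs (s - t0) < rho / 2 -> Rabs t < rho / 2 ->
  Rabs (s + t - t0) < rho /\ Rabs (s - t - t0) < rho.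
Proof.
  intros h1 h2. apply Rabs_lt_between in h1, h2.
  split; apply Rabs_lt_between; lra.
Qed.

Lemma ex_derive_continuous_R (f : R -> R) x : ex_derive f x -> continuous f x.
Proof. apply (@ex_derive_continuous R_AbsRing R_NormedModule). Qed.

Lemma det2_kernel a b c d x y : a * d - b * c <> 0 ->
  a * x + b * y = 0 -> c * x + d * y = 0 -> x = 0 /\ y = 0.
Proof.
  intros HD E1 E2.
  assert (Ex : x * (a * d - b * c) = 0).
  { transitivity (d * (a * x + b * y) - b * (c * x + d * y)); [ring | rewrite E1, E2; ring]. }
  assert (Ey : y * (a * d - b * c) = 0).
  { transitivity (a * (c * x + d * y) - c * (a * x + b * y)); [ring | rewrite E1, E2; ring]. }
  apply Rmult_integral in Ex as [Ex|Ex]; apply Rmult_integral in Ey as [Ey|Ey]; tauto.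
Qed.

Lemma Rminmax_in lo hi x y t :
  lo <= x <= hi -> lo <= y <= hi -> Rmin x y <= t <= Rmax x y -> lo <= t <= hi.
Proof. unfold Rmin, Rmax; destruct Rle_dec; lra. Qed.

Lemma MVT_affine_bound (f df : R -> R) lo hi m e :
  (forall x, lo <= x <= hi -> is_derive f x (df x)) ->
  (forall x, lo <= x <= hi -> Rabs (df x - m) <= e) ->
  forall x y, lo <= x <= hi -> lo <= y <= hi ->
  Rabs (f y - f x - m * (y - x)) <= e * Rabs (y - x).
Proof.
  intros Hd Hb x y Hx Hy.
  destruct (MVT_gen (fun t => f t - m * t) x y (fun t => df t - m)) as [c [Hc Ec]].
  - intros t Ht. apply (is_derive_minus f (fun t => m * t)).
    + apply Hd, (Rminmax_in lo hi x y); lra.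
    + auto_derive; auto; ring.
  - intros t Ht. apply continuity_pt_filterlim.
    apply (continuous_minus f (fun t => m * t)).
    + apply ex_derive_continuous. exists (df t). apply Hd, (Rminmax_in lo hi x y); auto.
    + apply (continuous_mult (fun _ => m) (fun t => t)); [apply continuous_const | apply continuous_id].
  - replace (f y - f x - m * (y - x)) with ((df c - m) * (y - x)) by lra.
    rewrite Rabs_mult. apply Rmult_le_compat_r; [apply Rabs_pos|].
    apply Hb, (Rminmax_in lo hi x y); auto.
Qed.

Lemma Lipschitz_continuity (g : R -> R) K :
  (forall x y, Rabs (g x - g y) <= K * Rabs (x - y)) -> continuity g.
Proof.
  intros H x. apply continuity_pt_filterlim, (proj2 (filterlim_locally g (g x))).
  intros [e He]. assert (HK : 0 < Rabs K + 1) by (pose proof (Rabs_pos K); lra).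
  exists (mkposreal (e / (Rabs K + 1)) (Rdiv_lt_0_compat _ _ He HK)).
  intros y Hy. change (Rabs (g y - g x) < e). change (Rabs (y - x) < e / (Rabs K + 1)) in Hy.
  apply (Rle_lt_trans _ (K * Rabs (y - x))); [apply H|].
  apply (Rle_lt_trans _ ((Rabs K + 1) * Rabs (y - x))).
  - apply Rmult_le_compat_r; [apply Rabs_pos | pose proof (Rle_abs K); lra].
  - apply (Rmult_lt_compat_l (Rabs K + 1)) in Hy; [|lra].
    unfold Rdiv in Hy. rewrite <- Rmult_assoc, Rinv_r_simpl_m in Hy; lra.
Qed.

Definition clamp lo hi x := Rmax lo (Rmin hi x).

Lemma clamp_in lo hi x : lo <= hi -> lo <= clamp lo hi x <= hi.
Proof. unfold clamp, Rmax, Rmin; repeat destruct Rle_dec; lra. Qed.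

Lemma clamp_id lo hi x : lo <= x <= hi -> clamp lo hi x = x.
Proof. unfold clamp, Rmax, Rmin; repeat destruct Rle_dec; lra. Qed.

Lemma clamp_Lipschitz lo hi x y :
  lo <= hi -> Rabs (clamp lo hi x - clamp lo hi y) <= Rabs (x - y).
Proof. unfold clamp, Rmax, Rmin; repeat destruct Rle_dec; unfold Rabs; repeat destruct Rcase_abs; lra. Qed.

Lemma IVT_Lipschitz (f : R -> R) lo hi L : lo < hi ->
  (forall x y, lo <= x <= hi -> lo <= y <= hi -> Rabs (f x - f y) <= L * Rabs (x - y)) ->
  f lo < 0 -> 0 < f hi -> exists x, lo < x < hi /\ f x = 0.
Proof.
  intros Hlh HL Hlo Hhi.
  assert (HL0 : 0 <= L).
  { assert (Rabs (f lo - f hi) <= L * Rabs (lo - hi)) by (apply HL; lra).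
    assert (0 < Rabs (lo - hi)) by (apply Rabs_pos_lt; lra).
    pose proof (Rabs_pos (f lo - f hi)). nra. }
  (* f is only Lipschitz on [lo, hi]: extend it by clamping to apply the IVT *)
  set (g x := f (clamp lo hi x)).
  assert (Hg : continuity g).
  { apply (Lipschitz_continuity g L). intros x y. unfold g.
    eapply Rle_trans; [apply HL; apply clamp_in; lra|].
    apply Rmult_le_compat_l; [exact HL0 | apply clamp_Lipschitz; lra]. }
  destruct (IVT_gen g lo hi 0 Hg) as [x [Hx Ex]].
  - unfold g. rewrite !clamp_id by lra. unfold Rmin, Rmax; destruct Rle_dec; lra.
  - rewrite Rmin_left, Rmax_right in Hx by lra. unfold g in Ex. rewrite clamp_id in Ex by lra.
    exists x. split; [|exact Ex].
    split; [destruct (Req_dec x lo) as [->|] | destruct (Req_dec x hi) as [->|]]; lra.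
Qed.

Lemma is_derive_linear_error (f : R -> R) x l : is_derive f x l ->
  forall e, 0 < e -> exists d, 0 < d /\ forall y, Rabs (y - x) < d ->
    Rabs (f y - f x - l * (y - x)) <= e * Rabs (y - x).
Proof.
  intros H e He. apply is_derive_Reals in H. destruct (H e He) as [d Hd].
  exists d. split; [apply cond_pos|]. intros y Hy.
  destruct (Req_dec y x) as [->|E].
  - rewrite !Rminus_eq_0, Rmult_0_r, Rminus_0_r, Rabs_R0. lra.
  - specialize (Hd (y - x) ltac:(lra) Hy). replace (x + (y - x)) with y in Hd by ring.
    replace (f y - f x - l * (y - x)) with (((f y - f x) / (y - x) - l) * (y - x)) by (field; lra).
    rewrite Rabs_mult. apply Rmult_le_compat_r; [apply Rabs_pos | lra].
Qed.

Lemma linear_error_is_derive (f : R -> R) x l :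
  (forall e, 0 < e -> exists d, 0 < d /\ forall y, Rabs (y - x) < d ->
     Rabs (f y - f x - l * (y - x)) <= e * Rabs (y - x)) ->
  is_derive f x l.
Proof.
  intros H. apply is_derive_Reals. intros e He.
  destruct (H (e / 2) ltac:(lra)) as [d [Hd Hf]].
  exists (mkposreal d Hd). intros h Hh0 Hh. simpl in Hh.
  specialize (Hf (x + h) ltac:(replace (x + h - x) with h by ring; exact Hh)).
  replace (x + h - x) with h in Hf by ring.
  assert (Hha : 0 < Rabs h) by (apply Rabs_pos_lt; exact Hh0).
  replace ((f (x + h) - f x) / h - l) with ((f (x + h) - f x - l * h) / h) by (field; exact Hh0).
  rewrite Rabs_div by exact Hh0. apply (Rmult_lt_reg_r (Rabs h)); [exact Hha|].
  unfold Rdiv. rewrite Rmult_assoc, Rinv_l, Rmult_1_r by (apply Rgt_not_eq; exact Hha).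
  apply (Rle_lt_trans _ _ _ Hf), Rmult_lt_compat_r; lra.
Qed.

Lemma cramer_perturbation a1 a2 b1 b2 x y r1 r2 e1 e2 S :
  a1 * b2 - b1 * a2 <> 0 ->
  a1 * x + b1 * y = r1 + e1 -> a2 * x + b2 * y = r2 + e2 ->
  Rabs a1 <= S -> Rabs a2 <= S -> Rabs b1 <= S -> Rabs b2 <= S ->
  Rabs (x - (r1 * b2 - r2 * b1) / (a1 * b2 - b1 * a2)) * Rabs (a1 * b2 - b1 * a2)
    <= (Rabs e1 + Rabs e2) * S /\
  Rabs (y - (a1 * r2 - a2 * r1) / (a1 * b2 - b1 * a2)) * Rabs (a1 * b2 - b1 * a2)
    <= (Rabs e1 + Rabs e2) * S.
Proof.
  intros HD E1 E2 Ha1 Ha2 Hb1 Hb2.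
  assert (Er : r1 = a1 * x + b1 * y - e1 /\ r2 = a2 * x + b2 * y - e2) by lra.
  rewrite <- !Rabs_mult.
  pose proof (Rabs_pos e1). pose proof (Rabs_pos e2).
  assert (Hb : forall p q, Rabs p <= S -> Rabs q <= S ->
      Rabs (e1 * p + e2 * q) <= (Rabs e1 + Rabs e2) * S).
  { intros p q Hp Hq. eapply Rle_trans; [apply Rabs_lin2|].
    pose proof (Rmult_le_compat_l _ _ _ (Rabs_pos e1) Hp).
    pose proof (Rmult_le_compat_l _ _ _ (Rabs_pos e2) Hq). lra. }
  split.
  - replace ((x - (r1 * b2 - r2 * b1) / (a1 * b2 - b1 * a2)) * (a1 * b2 - b1 * a2))
      with (e1 * b2 + e2 * (- b1)) by (destruct Er as [-> ->]; field; exact HD).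
    apply Hb; rewrite ?Rabs_Ropp; assumption.
  - replace ((y - (a1 * r2 - a2 * r1) / (a1 * b2 - b1 * a2)) * (a1 * b2 - b1 * a2))
      with (e1 * (- a2) + e2 * a1) by (destruct Er as [-> ->]; field; exact HD).
    apply Hb; rewrite ?Rabs_Ropp; assumption.
Qed.

Lemma Rmin4_pos a b c d : 0 < a -> 0 < b -> 0 < c -> 0 < d ->
  let m := Rmin (Rmin a b) (Rmin c d) in 0 < m /\ m <= a /\ m <= b /\ m <= c /\ m <= d.
Proof. intros ? ? ? ? m. unfold m, Rmin; repeat destruct Rle_dec; lra. Qed.

Lemma separable_linear_error (f g : R -> R) u0 w0 lf lg :
  is_derive f u0 lf -> is_derive g w0 lg ->
  forall eps, 0 < eps -> exists d, 0 < d /\ forall u w, Rabs (u - u0) < d -> Rabs (w - w0) < d ->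
    Rabs (f u + g w - (f u0 + g w0) - (lf * (u - u0) + lg * (w - w0)))
      <= eps * (Rabs (u - u0) + Rabs (w - w0)).
Proof.
  intros Df Dg eps Heps.
  destruct (is_derive_linear_error _ _ _ Df eps Heps) as [d1 [Hd1 T1]].
  destruct (is_derive_linear_error _ _ _ Dg eps Heps) as [d2 [Hd2 T2]].
  exists (Rmin d1 d2). split; [apply Rmin_pos; assumption|]. intros u w Hu Hw.
  pose proof (Rmin_l d1 d2). pose proof (Rmin_r d1 d2).
  specialize (T1 u ltac:(lra)). specialize (T2 w ltac:(lra)).
  replace (f u + g w - (f u0 + g w0) - (lf * (u - u0) + lg * (w - w0)))
    with ((f u - f u0 - lf * (u - u0)) + (g w - g w0 - lg * (w - w0))) by ring.
  eapply Rle_trans; [apply Rabs_triang | lra].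
Qed.

Section ImplicitDerivative.
Variables (f1 f2 g1 g2 u w : R -> R) (s0 l11 l21 l12 l22 v1 v2 C d0 : R).
Hypotheses (D11 : is_derive f1 (u s0) l11) (D21 : is_derive f2 (u s0) l21).
Hypotheses (D12 : is_derive g1 (w s0) l12) (D22 : is_derive g2 (w s0) l22).
Hypothesis Hd0 : 0 < d0.
Hypothesis Hrel : forall s, Rabs (s - s0) < d0 ->
  f1 (u s) + g1 (w s) = f1 (u s0) + g1 (w s0) + (s - s0) * v1 /\
  f2 (u s) + g2 (w s) = f2 (u s0) + g2 (w s0) + (s - s0) * v2 /\
  Rabs (u s - u s0) + Rabs (w s - w s0) <= C * Rabs (s - s0).

(* Along (u, w), F (u, w) = (f1 u + g1 w, f2 u + g2 w) moves with constant velocity v,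
   so the Jacobian of F at (u s0, w s0) maps the increment of (u, w) to (s - s0) v up to
   o (s - s0). *)
Lemma implicit_linear_error eps : 0 < eps -> exists d, 0 < d /\ forall s, Rabs (s - s0) < d ->
  Rabs (l11 * (u s - u s0) + l12 * (w s - w s0) - (s - s0) * v1) <= eps * Rabs (s - s0) /\
  Rabs (l21 * (u s - u s0) + l22 * (w s - w s0) - (s - s0) * v2) <= eps * Rabs (s - s0).
Proof.
  intros Heps. set (M := Rabs C + 1). assert (HM : 0 < M) by (unfold M; pose proof (Rabs_pos C); lra).
  destruct (separable_linear_error _ _ _ _ _ _ D11 D12 (eps / M)) as [d1 [Hd1 T1]];
    [apply Rdiv_lt_0_compat; lra|].
  destruct (separable_linear_error _ _ _ _ _ _ D21 D22 (eps / M)) as [d2 [Hd2 T2]];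
    [apply Rdiv_lt_0_compat; lra|].
  set (dl := Rmin d1 d2). assert (Hdl : 0 < dl /\ dl <= d1 /\ dl <= d2)
    by (unfold dl, Rmin; destruct Rle_dec; lra).
  exists (Rmin d0 (dl / M)). split; [apply Rmin_pos; [lra | apply Rdiv_lt_0_compat; lra]|].
  intros s Hs. pose proof (Rmin_l d0 (dl / M)). pose proof (Rmin_r d0 (dl / M)).
  destruct (Hrel s ltac:(lra)) as [R1 [R2 Lip]].
  assert (Hsmall : Rabs (u s - u s0) + Rabs (w s - w s0) <= M * Rabs (s - s0))
    by (unfold M; pose proof (Rle_abs C); pose proof (Rabs_pos (s - s0)); nra).
  assert (Hclose : M * Rabs (s - s0) < dl).
  { assert (Hh : Rabs (s - s0) < dl / M) by lra. apply (Rmult_lt_compat_l M) in Hh; [|lra].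
    replace (M * (dl / M)) with dl in Hh by (field; lra). exact Hh. }
  pose proof (Rabs_pos (u s - u s0)). pose proof (Rabs_pos (w s - w s0)).
  specialize (T1 (u s) (w s) ltac:(lra) ltac:(lra)). specialize (T2 (u s) (w s) ltac:(lra) ltac:(lra)).
  rewrite R1, <- Rabs_Ropp in T1. rewrite R2, <- Rabs_Ropp in T2.
  assert (Hm : eps / M * (Rabs (u s - u s0) + Rabs (w s - w s0)) <= eps * Rabs (s - s0)).
  { apply Rle_trans with (eps / M * (M * Rabs (s - s0))).
    - apply Rmult_le_compat_l; [apply Rlt_le, Rdiv_lt_0_compat|]; lra.
    - right. field. lra. }
  split; (eapply Rle_trans; [| exact Hm]).
  - eapply Rle_trans; [| exact T1]. right. f_equal. ring.
  - eapply Rle_trans; [| exact T2]. right. f_equal. ring.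
Qed.

Lemma implicit_derive : l11 * l22 - l12 * l21 <> 0 ->
  is_derive u s0 ((v1 * l22 - v2 * l12) / (l11 * l22 - l12 * l21)) /\
  is_derive w s0 ((l11 * v2 - l21 * v1) / (l11 * l22 - l12 * l21)).
Proof.
  intros HD. set (S := Rabs l11 + Rabs l12 + Rabs l21 + Rabs l22 + 1).
  assert (HS : 1 <= S /\ Rabs l11 <= S /\ Rabs l21 <= S /\ Rabs l12 <= S /\ Rabs l22 <= S) by
    (unfold S; pose proof (Rabs_pos l11); pose proof (Rabs_pos l12);
     pose proof (Rabs_pos l21); pose proof (Rabs_pos l22); lra).
  assert (HDa : 0 < Rabs (l11 * l22 - l12 * l21)) by (apply Rabs_pos_lt; exact HD).
  assert (key : forall e, 0 < e -> exists d, 0 < d /\ forall s, Rabs (s - s0) < d ->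
     Rabs (u s - u s0 - (v1 * l22 - v2 * l12) / (l11 * l22 - l12 * l21) * (s - s0))
       <= e * Rabs (s - s0) /\
     Rabs (w s - w s0 - (l11 * v2 - l21 * v1) / (l11 * l22 - l12 * l21) * (s - s0))
       <= e * Rabs (s - s0)).
  { intros e He. set (eps := e * Rabs (l11 * l22 - l12 * l21) / (2 * S)).
    destruct (implicit_linear_error eps) as [d [Hd Hl]];
      [apply Rdiv_lt_0_compat; [apply Rmult_lt_0_compat|]; lra|].
    exists d. split; [exact Hd|]. intros s Hs. destruct (Hl s Hs) as [B1 B2].
    destruct (cramer_perturbation l11 l21 l12 l22 (u s - u s0) (w s - w s0) ((s - s0) * v1)
        ((s - s0) * v2) (l11 * (u s - u s0) + l12 * (w s - w s0) - (s - s0) * v1)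
        (l21 * (u s - u s0) + l22 * (w s - w s0) - (s - s0) * v2) S HD) as [Bx By];
      try ring; try apply HS.
    assert (Hfin : (Rabs (l11 * (u s - u s0) + l12 * (w s - w s0) - (s - s0) * v1)
       + Rabs (l21 * (u s - u s0) + l22 * (w s - w s0) - (s - s0) * v2)) * S
       <= e * Rabs (s - s0) * Rabs (l11 * l22 - l12 * l21)).
    { apply Rle_trans with (2 * S * eps * Rabs (s - s0)); [nra|].
      unfold eps. right. field. lra. }
    replace ((v1 * l22 - v2 * l12) / (l11 * l22 - l12 * l21) * (s - s0))
      with (((s - s0) * v1 * l22 - (s - s0) * v2 * l12) / (l11 * l22 - l12 * l21)) by (field; exact HD).
    replace ((l11 * v2 - l21 * v1) / (l11 * l22 - l12 * l21) * (s - s0))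
      with ((l11 * ((s - s0) * v2) - l21 * ((s - s0) * v1)) / (l11 * l22 - l12 * l21)) by (field; exact HD).
    split; apply (Rmult_le_reg_r _ _ _ HDa); lra. }
  split; apply linear_error_is_derive; intros e He; destruct (key e He) as [d [Hd Hk]];
    exists d; split; auto; intros s Hs; apply Hk, Hs.
Qed.

End ImplicitDerivative.

Lemma differentiable_of_partials (Phi Phiu : R -> R -> R) u0 w0 lw :
  (exists d, 0 < d /\ forall u w, Rabs (u - u0) < d -> Rabs (w - w0) < d ->
      is_derive (fun x => Phi x w) u (Phiu u w)) ->
  continuous (fun p : R * R => Phiu (fst p) (snd p)) (u0, w0) ->
  is_derive (fun w => Phi u0 w) w0 lw ->
  differentiable_pt_lim Phi u0 w0 (Phiu u0 w0) lw.
Proof.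
  intros [d [Hd HPu]] Hc Hw eps.
  assert (He2 : 0 < eps / 2) by (pose proof (cond_pos eps); lra).
  destruct (continuous2_eps _ _ _ Hc _ He2) as [d1 [Hd1 H1]].
  destruct (is_derive_linear_error _ _ _ Hw _ He2) as [d2 [Hd2 H2]].
  set (dm := Rmin d (Rmin d1 d2)).
  assert (Hdm : 0 < dm /\ dm <= d /\ dm <= d1 /\ dm <= d2)
    by (unfold dm, Rmin; repeat destruct Rle_dec; lra).
  exists (mkposreal dm (proj1 Hdm)). simpl. intros u w Hu Hw'.
  destruct (MVT_cor4 (fun x => Phi x w) (fun x => Phiu x w) u0 (Rabs (u - u0))) with (b := u)
    as [xi [Exi Hxi]]; [intros x Hx; apply HPu; lra | lra |].
  specialize (H1 xi w ltac:(lra) ltac:(lra)). simpl in H1.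
  specialize (H2 w ltac:(lra)).
  replace (Phi u w - Phi u0 w0 - (Phiu u0 w0 * (u - u0) + lw * (w - w0))) with
    ((Phiu xi w - Phiu u0 w0) * (u - u0) + (Phi u0 w - Phi u0 w0 - lw * (w - w0))) by lra.
  eapply Rle_trans; [apply Rabs_triang|]. rewrite Rabs_mult.
  pose proof (Rmax_l (Rabs (u - u0)) (Rabs (w - w0))).
  pose proof (Rmax_r (Rabs (u - u0)) (Rabs (w - w0))).
  pose proof (Rabs_pos (u - u0)). pose proof (Rabs_pos (Phiu xi w - Phiu u0 w0)).
  assert (Rabs (Phiu xi w - Phiu u0 w0) * Rabs (u - u0) <= eps / 2 * Rabs (u - u0))
    by (apply Rmult_le_compat_r; lra).
  pose proof (cond_pos eps). nra.
Qed.

Lemma is_derive_comp_2d (Phi Phiu : R -> R -> R) (g1 g2 : R -> R) s0 l1 l2 lw :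
  is_derive g1 s0 l1 -> is_derive g2 s0 l2 ->
  (exists d, 0 < d /\ forall u w, Rabs (u - g1 s0) < d -> Rabs (w - g2 s0) < d ->
      is_derive (fun x => Phi x w) u (Phiu u w)) ->
  continuous (fun p : R * R => Phiu (fst p) (snd p)) (g1 s0, g2 s0) ->
  is_derive (fun w => Phi (g1 s0) w) (g2 s0) lw ->
  is_derive (fun s => Phi (g1 s) (g2 s)) s0 (Phiu (g1 s0) (g2 s0) * l1 + lw * l2).
Proof.
  intros D1 D2 HP HC HW. apply is_derive_Reals, derivable_pt_lim_comp_2d.
  - apply differentiable_of_partials; auto.
  - apply is_derive_Reals, D1.
  - apply is_derive_Reals, D2.
Qed.

(** * Inverting maps close to the identity *)

Lemma Rabs_le_sum3 a b c : Rabs a <= Rabs (a + b + c) + Rabs b + Rabs c.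
Proof.
  replace a with ((a + b + c) + (- b) + (- c)) at 1 by ring.
  rewrite <- (Rabs_Ropp b), <- (Rabs_Ropp c).
  eapply Rle_trans; [apply Rabs_triang|]. apply Rplus_le_compat_r, Rabs_triang.
Qed.

(* The separable map (u, w) |-> (f1 u + g1 w, f2 u + g2 w) is 1/8-close to the identity on
   the square of radius r around (t0, t0). *)
Definition near_identity (t0 r : R) (f1 f2 g1 g2 : R -> R) := forall x y,
  Rabs (x - t0) <= r -> Rabs (y - t0) <= r ->
  Rabs (f1 y - f1 x - (y - x)) <= /8 * Rabs (y - x) /\
  Rabs (f2 y - f2 x) <= /8 * Rabs (y - x) /\
  Rabs (g1 y - g1 x) <= /8 * Rabs (y - x) /\
  Rabs (g2 y - g2 x - (y - x)) <= /8 * Rabs (y - x).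

Section NearIdentity.
Variables (t0 r : R) (f1 f2 g1 g2 : R -> R).
Hypothesis Hr : 0 < r.
Hypothesis Hnear : near_identity t0 r f1 f2 g1 g2.

Lemma near_identity_inverse_Lipschitz u w u' w' :
  Rabs (u - t0) <= r -> Rabs (w - t0) <= r -> Rabs (u' - t0) <= r -> Rabs (w' - t0) <= r ->
  Rabs (u - u') + Rabs (w - w') <=
    4/3 * (Rabs ((f1 u + g1 w) - (f1 u' + g1 w')) + Rabs ((f2 u + g2 w) - (f2 u' + g2 w'))).
Proof.
  intros h1 h2 h3 h4.
  destruct (Hnear u' u h3 h1) as [A1 [A2 _]]. destruct (Hnear w' w h4 h2) as [_ [_ [A3 A4]]].
  pose proof (Rabs_le_sum3 (u - u') (f1 u - f1 u' - (u - u')) (g1 w - g1 w')).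
  pose proof (Rabs_le_sum3 (w - w') (f2 u - f2 u') (g2 w - g2 w' - (w - w'))).
  replace (f1 u + g1 w - (f1 u' + g1 w'))
    with (u - u' + (f1 u - f1 u' - (u - u')) + (g1 w - g1 w')) by ring.
  replace (f2 u + g2 w - (f2 u' + g2 w'))
    with (w - w' + (f2 u - f2 u') + (g2 w - g2 w' - (w - w'))) by ring.
  lra.
Qed.

Let lo := t0 - r.
Let hi := t0 + r.

Lemma near_identity_interval x y : lo <= x <= hi -> lo <= y <= hi ->
  Rabs (f1 y - f1 x - (y - x)) <= /8 * Rabs (y - x) /\
  Rabs (f2 y - f2 x) <= /8 * Rabs (y - x) /\
  Rabs (g1 y - g1 x) <= /8 * Rabs (y - x) /\
  Rabs (g2 y - g2 x - (y - x)) <= /8 * Rabs (y - x).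
Proof. intros Hx Hy. apply Hnear; apply Rabs_le_between'; unfold lo, hi in *; lra. Qed.

(* Surjectivity: solve the first equation for u as a Lipschitz function of w, then the second
   one, which becomes strictly increasing in w, by the intermediate value theorem. *)
Section FirstEquation.
Variable P1 : R.
Hypothesis HP1 : Rabs (P1 - (f1 t0 + g1 t0)) <= r / 4.

Lemma near_identity_solve_first w : lo <= w <= hi ->
  exists u, lo <= u <= hi /\ f1 u + g1 w = P1.
Proof.
  intros Hw.
  assert (Hw0 : Rabs (w - t0) <= r) by (apply Rabs_le_between'; unfold lo, hi in *; lra).
  assert (Ht0 : lo <= t0 <= hi) by (unfold lo, hi; lra).
  destruct (Hnear t0 w ltac:(rewrite Rminus_eq_0, Rabs_R0; lra) Hw0) as [_ [_ [B _]]].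
  assert (Bg : - (r / 8) <= g1 w - g1 t0 <= r / 8) by (apply Rabs_le_between; lra).
  apply Rabs_le_between in HP1.
  destruct (IVT_Lipschitz (fun u => f1 u + g1 w - P1) lo hi (9/8)) as [u [Hu Eu]].
  - unfold lo, hi; lra.
  - intros x y Hx Hy. destruct (near_identity_interval y x Hy Hx) as [A _].
    apply Rabs_le_between in A. apply Rabs_le_between.
    destruct (Rle_dec y x); [rewrite Rabs_right in * by lra | rewrite Rabs_left in * by lra]; lra.
  - destruct (near_identity_interval t0 lo Ht0 ltac:(unfold lo; lra)) as [A _].
    replace (lo - t0) with (- r) in A by (unfold lo; ring).
    rewrite Rabs_Ropp, (Rabs_right r) in A by lra. apply Rabs_le_between in A. unfold lo in *. lra.
  - destruct (near_identity_interval t0 hi Ht0 ltac:(unfold hi; lra)) as [A _].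
    replace (hi - t0) with r in A by (unfold hi; ring).
    rewrite (Rabs_right r) in A by lra. apply Rabs_le_between in A. unfold hi in *. lra.
  - exists u. split; lra.
Qed.

Definition first_solution w := epsilon (inhabits 0) (fun u => lo <= u <= hi /\ f1 u + g1 w = P1).

Lemma first_solution_spec w : lo <= w <= hi ->
  lo <= first_solution w <= hi /\ f1 (first_solution w) + g1 w = P1.
Proof. intros Hw. unfold first_solution. apply epsilon_spec, near_identity_solve_first, Hw. Qed.

Lemma first_solution_Lipschitz w w' : lo <= w <= hi -> lo <= w' <= hi ->
  Rabs (first_solution w - first_solution w') <= /7 * Rabs (w - w').
Proof.
  intros Hw Hw'.
  destruct (first_solution_spec w Hw) as [Hu Eu]. destruct (first_solution_spec w' Hw') as [Hu' Eu'].
  destruct (near_identity_interval _ _ Hu' Hu) as [A _].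
  destruct (near_identity_interval _ _ Hw' Hw) as [_ [_ [B _]]].
  replace (f1 (first_solution w) - f1 (first_solution w'))
    with (- (g1 w - g1 w')) in A by lra.
  pose proof (Rabs_le_sum3 (first_solution w - first_solution w')
    (- (g1 w - g1 w') - (first_solution w - first_solution w')) (g1 w - g1 w')).
  replace (first_solution w - first_solution w' +
     (- (g1 w - g1 w') - (first_solution w - first_solution w')) + (g1 w - g1 w')) with 0 in H by ring.
  rewrite Rabs_R0 in H. lra.
Qed.

End FirstEquation.

Section SecondEquation.
Variables P1 P2 : R.
Hypothesis HP1 : Rabs (P1 - (f1 t0 + g1 t0)) <= r / 4.
Hypothesis HP2 : Rabs (P2 - (f2 t0 + g2 t0)) <= r / 4.

Let k w := f2 (first_solution P1 w) + g2 w - P2.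

Lemma second_residual_increasing w w' : lo <= w' <= hi -> lo <= w <= hi -> w' <= w ->
  k w - k w' >= 6/7 * (w - w').
Proof.
  intros Hw' Hw Hle. unfold k.
  destruct (first_solution_spec P1 HP1 w Hw) as [Hu _].
  destruct (first_solution_spec P1 HP1 w' Hw') as [Hu' _].
  destruct (near_identity_interval _ _ Hu' Hu) as [_ [A _]].
  destruct (near_identity_interval _ _ Hw' Hw) as [_ [_ [_ B]]].
  pose proof (first_solution_Lipschitz P1 HP1 w w' Hw Hw').
  rewrite (Rabs_right (w - w')) in * by lra.
  apply Rabs_le_between in A. apply Rabs_le_between in B. lra.
Qed.

Lemma second_residual_Lipschitz x y : lo <= x <= hi -> lo <= y <= hi ->
  Rabs (k x - k y) <= 2 * Rabs (x - y).
Proof.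
  intros Hx Hy. unfold k.
  destruct (first_solution_spec P1 HP1 x Hx) as [Hu _].
  destruct (first_solution_spec P1 HP1 y Hy) as [Hu' _].
  destruct (near_identity_interval _ _ Hu' Hu) as [_ [A _]].
  destruct (near_identity_interval _ _ Hy Hx) as [_ [_ [_ B]]].
  pose proof (first_solution_Lipschitz P1 HP1 x y Hx Hy).
  replace (f2 (first_solution P1 x) + g2 x - P2 - (f2 (first_solution P1 y) + g2 y - P2)) with
    ((f2 (first_solution P1 x) - f2 (first_solution P1 y)) + (g2 x - g2 y - (x - y)) + (x - y)) by ring.
  eapply Rle_trans; [apply Rabs_triang|].
  eapply Rle_trans; [apply Rplus_le_compat_r, Rabs_triang|]. pose proof (Rabs_pos (x - y)). lra.
Qed.

Lemma second_residual_center : Rabs (k t0) <= 3 * r / 8.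
Proof.
  assert (Ht0 : lo <= t0 <= hi) by (unfold lo, hi; lra).
  destruct (first_solution_spec P1 HP1 t0 Ht0) as [Hu _].
  destruct (near_identity_interval t0 _ Ht0 Hu) as [_ [A _]].
  assert (Rabs (first_solution P1 t0 - t0) <= r) by (apply Rabs_le_between'; unfold lo, hi in *; lra).
  unfold k. apply Rabs_le_between. apply Rabs_le_between in A. apply Rabs_le_between in HP2. lra.
Qed.

Lemma near_identity_surjective : exists u w, Rabs (u - t0) <= r /\ Rabs (w - t0) <= r /\
  f1 u + g1 w = P1 /\ f2 u + g2 w = P2.
Proof.
  assert (Ht0 : lo <= t0 <= hi) by (unfold lo, hi; lra).
  pose proof second_residual_center as Kt0. apply Rabs_le_between in Kt0.
  destruct (IVT_Lipschitz k lo hi 2) as [w [Hw Ew]].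
  - unfold lo, hi; lra.
  - exact second_residual_Lipschitz.
  - pose proof (second_residual_increasing t0 lo ltac:(unfold lo; lra) Ht0 ltac:(unfold lo; lra)).
    unfold lo in *. lra.
  - pose proof (second_residual_increasing hi t0 Ht0 ltac:(unfold hi; lra) ltac:(unfold hi; lra)).
    unfold hi in *. lra.
  - destruct (first_solution_spec P1 HP1 w ltac:(lra)) as [Hu Eu].
    exists (first_solution P1 w), w. unfold k in Ew.
    repeat split; try lra; apply Rabs_le_between'; unfold lo, hi in *; lra.
Qed.

End SecondEquation.
End NearIdentity.

(** * Lightlike translation surfaces are Born-Infeld graphs *)

(* The Born-Infeld operator of psi at X(u, w) = A(u) + B(w), with psi (A1 + B1, A2 + B2) =
   Ax + Bx, written through the inverse Jacobian [[b2, -b1], [-a2, a1]] / D.  Here p, q are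
   the first derivatives of psi, and P1u ... P2w the (u, w)-derivatives of p and q: the
   hypotheses are the chain rule for psi, the chain rule for p and q applied to the mixed
   derivatives of psi, and the nullity of A' and B'. *)
Lemma BI_operator_null_translation a1 a2 ax b1 b2 bx P1u P1w P2u P2w p q :
  a1 * b2 - b1 * a2 <> 0 ->
  p * a1 + q * a2 = ax -> p * b1 + q * b2 = bx ->
  P1w * a1 + P2w * a2 = 0 -> P1u * b1 + P2u * b2 = 0 ->
  ax ^ 2 + a1 ^ 2 - a2 ^ 2 = 0 -> bx ^ 2 + b1 ^ 2 - b2 ^ 2 = 0 ->
  (1 - q ^ 2) * (P1u * (b2 / (a1 * b2 - b1 * a2)) + P1w * (- a2 / (a1 * b2 - b1 * a2)))
  + 2 * p * q * (P1u * (- b1 / (a1 * b2 - b1 * a2)) + P1w * (a1 / (a1 * b2 - b1 * a2)))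
  - (1 + p ^ 2) * (P2u * (- b1 / (a1 * b2 - b1 * a2)) + P2w * (a1 / (a1 * b2 - b1 * a2))) = 0.
Proof.
  intros HD E1 E2 E3 E4 N1 N2.
  assert (Ha2 : a2 <> 0) by (intros ->; apply HD; assert (a1 = 0) by nra; subst; ring).
  assert (Hb2 : b2 <> 0) by (intros ->; apply HD; assert (b1 = 0) by nra; subst; ring).
  subst ax bx.
  set (T := (1 - q ^ 2) * (P1u * b2 - P1w * a2) + 2 * p * q * (- P1u * b1 + P1w * a1)
             - (1 + p ^ 2) * (- P2u * b1 + P2w * a1)).
  assert (HT : T * (a2 * b2) = 0).
  { transitivity (- P1u * a2 * ((p * b1 + q * b2) ^ 2 + b1 ^ 2 - b2 ^ 2)
       + P1w * b2 * ((p * a1 + q * a2) ^ 2 + a1 ^ 2 - a2 ^ 2)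
       + (1 + p ^ 2) * b1 * a2 * (P1u * b1 + P2u * b2)
       - (1 + p ^ 2) * a1 * b2 * (P1w * a1 + P2w * a2)); [unfold T; ring|].
    rewrite E3, E4, N1, N2. ring. }
  apply Rmult_integral in HT as [HT | HT];
    [| apply Rmult_integral in HT as [|]; contradiction].
  transitivity (T / (a1 * b2 - b1 * a2)); [unfold T; field; exact HD | rewrite HT; field; exact HD].
Qed.

Definition C2_ball (f : R -> R) (t0 R0 : R) := forall u, Rabs (u - t0) < R0 ->
  ex_derive f u /\ ex_derive (Derive f) u /\ continuous (Derive (Derive f)) u.

Section C2Ball.
Variables (f : R -> R) (t0 R0 u : R).
Hypotheses (Hf : C2_ball f t0 R0) (Hu : Rabs (u - t0) < R0).

Lemma C2_ball_ex_derive : ex_derive f u.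
Proof. apply Hf, Hu. Qed.
Lemma C2_ball_ex_derive2 : ex_derive (Derive f) u.
Proof. apply Hf, Hu. Qed.
Lemma C2_ball_is_derive : is_derive f u (Derive f u).
Proof. apply Derive_correct, C2_ball_ex_derive. Qed.
Lemma C2_ball_continuous : continuous f u.
Proof. apply ex_derive_continuous_R, C2_ball_ex_derive. Qed.
Lemma C2_ball_continuous1 : continuous (Derive f) u.
Proof. apply ex_derive_continuous_R, C2_ball_ex_derive2. Qed.
Lemma C2_ball_continuous2 : continuous (Derive (Derive f)) u.
Proof. apply Hf, Hu. Qed.

End C2Ball.

Section NullTranslationGraph.
Variables (t0 R0 : R) (A1 A2 Ax B1 B2 Bx : R -> R).
Hypothesis HR0 : 0 < R0.
Hypotheses (CA1 : C2_ball A1 t0 R0) (CA2 : C2_ball A2 t0 R0) (CAx : C2_ball Ax t0 R0).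
Hypotheses (CB1 : C2_ball B1 t0 R0) (CB2 : C2_ball B2 t0 R0) (CBx : C2_ball Bx t0 R0).
Hypothesis nullA : forall u, Rabs (u - t0) < R0 ->
  (Derive Ax u) ^ 2 + (Derive A1 u) ^ 2 - (Derive A2 u) ^ 2 = 0.
Hypothesis nullB : forall u, Rabs (u - t0) < R0 ->
  (Derive Bx u) ^ 2 + (Derive B1 u) ^ 2 - (Derive B2 u) ^ 2 = 0.
Hypothesis det0 : Derive A1 t0 * Derive B2 t0 - Derive B1 t0 * Derive A2 t0 <> 0.

Let a1 := Derive A1. Let a2 := Derive A2. Let ax := Derive Ax.
Let b1 := Derive B1. Let b2 := Derive B2. Let bx := Derive Bx.
Let Dl u w := a1 u * b2 w - b1 w * a2 u.

(* Normalize the Jacobian of (u, w) |-> (A1 u + B1 w, A2 u + B2 w) at (t0, t0) to the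
   identity by the constant matrix (n_ij), its inverse. *)
Let D0 := a1 t0 * b2 t0 - b1 t0 * a2 t0.
Let n11 := b2 t0 / D0. Let n12 := - b1 t0 / D0.
Let n21 := - a2 t0 / D0. Let n22 := a1 t0 / D0.
Let f1 x := n11 * A1 x + n12 * A2 x.
Let f2 x := n21 * A1 x + n22 * A2 x.
Let g1 x := n11 * B1 x + n12 * B2 x.
Let g2 x := n21 * B1 x + n22 * B2 x.
Let df1 x := n11 * a1 x + n12 * a2 x.
Let df2 x := n21 * a1 x + n22 * a2 x.
Let dg1 x := n11 * b1 x + n12 * b2 x.
Let dg2 x := n21 * b1 x + n22 * b2 x.

Lemma normalized_det : n11 * n22 - n12 * n21 <> 0.
Proof.
  replace (n11 * n22 - n12 * n21) with (/ D0) by (unfold n11, n12, n21, n22, D0; field; exact det0).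
  apply Rinv_neq_0_compat, det0.
Qed.

Lemma normalized_det_rel u w : df1 u * dg2 w - dg1 w * df2 u = (n11 * n22 - n12 * n21) * Dl u w.
Proof. unfold df1, df2, dg1, dg2, Dl. ring. Qed.

Lemma normalized_derivative_t0 : df1 t0 = 1 /\ df2 t0 = 0 /\ dg1 t0 = 0 /\ dg2 t0 = 1.
Proof.
  unfold df1, df2, dg1, dg2, n11, n12, n21, n22, D0.
  pose proof det0. repeat split; field; auto.
Qed.

Lemma normalized_is_derive x : Rabs (x - t0) < R0 ->
  is_derive f1 x (df1 x) /\ is_derive f2 x (df2 x) /\ is_derive g1 x (dg1 x) /\ is_derive g2 x (dg2 x).
Proof.
  intros Hx.
  pose proof (C2_ball_is_derive _ _ _ _ CA1 Hx). pose proof (C2_ball_is_derive _ _ _ _ CA2 Hx).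
  pose proof (C2_ball_is_derive _ _ _ _ CB1 Hx). pose proof (C2_ball_is_derive _ _ _ _ CB2 Hx).
  unfold f1, f2, g1, g2, df1, df2, dg1, dg2.
  split; [|split; [|split]];
    (auto_derive; [repeat split; eexists; eassumption | unfold a1, a2, b1, b2; eta_Derive; ring]).
Qed.

Lemma normalized_derivative_continuous x : Rabs (x - t0) < R0 ->
  continuous df1 x /\ continuous df2 x /\ continuous dg1 x /\ continuous dg2 x.
Proof.
  intros Hx.
  pose proof (C2_ball_continuous1 _ _ _ _ CA1 Hx). pose proof (C2_ball_continuous1 _ _ _ _ CA2 Hx).
  pose proof (C2_ball_continuous1 _ _ _ _ CB1 Hx). pose proof (C2_ball_continuous1 _ _ _ _ CB2 Hx).
  unfold df1, df2, dg1, dg2. repeat split; repeat continuous_step; assumption.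
Qed.

Definition admissible_radius (r : R) := 0 < r /\ 4 * r < R0 /\ forall x, Rabs (x - t0) <= 2 * r ->
  Rabs (df1 x - 1) <= /8 /\ Rabs (df2 x) <= /8 /\ Rabs (dg1 x) <= /8 /\ Rabs (dg2 x - 1) <= /8.

Lemma admissible_radius_exists : exists r, admissible_radius r.
Proof.
  assert (Ht : Rabs (t0 - t0) < R0) by (rewrite Rminus_eq_0, Rabs_R0; lra).
  destruct (normalized_derivative_continuous t0 Ht) as [C1 [C2 [C3 C4]]].
  destruct normalized_derivative_t0 as [E1 [E2 [E3 E4]]].
  assert (He : 0 < /8) by lra.
  destruct (continuous_eps _ _ C1 _ He) as [d1 [Hd1 H1]].
  destruct (continuous_eps _ _ C2 _ He) as [d2 [Hd2 H2]].
  destruct (continuous_eps _ _ C3 _ He) as [d3 [Hd3 H3]].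
  destruct (continuous_eps _ _ C4 _ He) as [d4 [Hd4 H4]].
  destruct (Rmin4_pos _ _ _ _ Hd1 Hd2 Hd3 Hd4) as [Hm [m1 [m2 [m3 m4]]]].
  set (m := Rmin (Rmin d1 d2) (Rmin d3 d4)) in *.
  exists (Rmin m R0 / 8). pose proof (Rmin_l m R0). pose proof (Rmin_r m R0).
  assert (0 < Rmin m R0) by (apply Rmin_pos; lra).
  split; [lra | split; [lra|]]. intros x Hx.
  specialize (H1 x ltac:(lra)). specialize (H2 x ltac:(lra)).
  specialize (H3 x ltac:(lra)). specialize (H4 x ltac:(lra)).
  rewrite E1 in H1. rewrite E2, Rminus_0_r in H2. rewrite E3, Rminus_0_r in H3. rewrite E4 in H4. lra.
Qed.

Section AdmissibleRadius.
Variable r : R.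
Hypothesis Hr : admissible_radius r.

Lemma admissible_pos : 0 < r.
Proof. apply Hr. Qed.

Lemma admissible_in_R0 x : Rabs (x - t0) <= 2 * r -> Rabs (x - t0) < R0.
Proof. pose proof Hr as [H0 [H1 _]]. lra. Qed.

Lemma normalized_near_identity : near_identity t0 r f1 f2 g1 g2.
Proof.
  destruct Hr as [H0 [_ Hb]]. intros x y Hx Hy.
  assert (Hd : forall z, t0 - r <= z <= t0 + r -> is_derive f1 z (df1 z) /\
      is_derive f2 z (df2 z) /\ is_derive g1 z (dg1 z) /\ is_derive g2 z (dg2 z))
    by (intros z Hz; apply normalized_is_derive, admissible_in_R0, Rabs_le_between'; lra).
  assert (Hb' : forall z, t0 - r <= z <= t0 + r -> Rabs (df1 z - 1) <= /8 /\
      Rabs (df2 z - 0) <= /8 /\ Rabs (dg1 z - 0) <= /8 /\ Rabs (dg2 z - 1) <= /8)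
    by (intros z Hz; rewrite !Rminus_0_r; apply Hb, Rabs_le_between'; lra).
  apply Rabs_le_between' in Hx. apply Rabs_le_between' in Hy.
  replace (f1 y - f1 x - (y - x)) with (f1 y - f1 x - 1 * (y - x)) by ring.
  replace (g2 y - g2 x - (y - x)) with (g2 y - g2 x - 1 * (y - x)) by ring.
  replace (f2 y - f2 x) with (f2 y - f2 x - 0 * (y - x)) by ring.
  replace (g1 y - g1 x) with (g1 y - g1 x - 0 * (y - x)) by ring.
  repeat split;
    [ apply (MVT_affine_bound f1 df1 (t0 - r) (t0 + r))
    | apply (MVT_affine_bound f2 df2 (t0 - r) (t0 + r))
    | apply (MVT_affine_bound g1 dg1 (t0 - r) (t0 + r))
    | apply (MVT_affine_bound g2 dg2 (t0 - r) (t0 + r)) ]; auto;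
    intros z Hz; apply (Hd z Hz) || apply (Hb' z Hz).
Qed.

Lemma Dl_neq0 u w : Rabs (u - t0) <= 2 * r -> Rabs (w - t0) <= 2 * r -> Dl u w <> 0.
Proof.
  destruct Hr as [_ [_ Hb]]. intros Hu Hw E.
  destruct (Hb u Hu) as [X1 [X2 _]]. destruct (Hb w Hw) as [_ [_ [X3 X4]]].
  apply Rabs_le_between in X1, X2, X3, X4.
  pose proof (normalized_det_rel u w) as R. rewrite E, Rmult_0_r in R. nra.
Qed.

Let K := Rabs n11 + Rabs n12 + Rabs n21 + Rabs n22 + 1.
Let rho := r / (4 * K).
Let y0 := A1 t0 + B1 t0.
Let z0 := A2 t0 + B2 t0.

Lemma K_pos : 0 < K.
Proof.
  unfold K. pose proof (Rabs_pos n11). pose proof (Rabs_pos n12).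
  pose proof (Rabs_pos n21). pose proof (Rabs_pos n22). lra.
Qed.

Lemma rho_pos : 0 < rho.
Proof. apply Rdiv_lt_0_compat; [apply admissible_pos | pose proof K_pos; lra]. Qed.

Lemma normalized_bound a b x y :
  Rabs x < rho -> Rabs y < rho -> Rabs a + Rabs b <= K -> Rabs (a * x + b * y) <= r / 4.
Proof.
  intros Hx Hy Hab. eapply Rle_trans; [apply Rabs_lin2|].
  pose proof (Rabs_pos a). pose proof (Rabs_pos b). pose proof K_pos. pose proof rho_pos.
  replace (r / 4) with (K * rho) by (unfold rho; field; lra). nra.
Qed.

Definition graph_domain y z := Rabs (y - y0) < rho /\ Rabs (z - z0) < rho.

Definition chart_spec y z (p : R * R) := Rabs (fst p - t0) <= r /\ Rabs (snd p - t0) <= r /\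
  A1 (fst p) + B1 (snd p) = y /\ A2 (fst p) + B2 (snd p) = z.
Definition chart y z := epsilon (inhabits (0, 0)) (chart_spec y z).
Definition chart_u y z := fst (chart y z).
Definition chart_w y z := snd (chart y z).

Lemma chart_correct y z : graph_domain y z ->
  Rabs (chart_u y z - t0) <= r /\ Rabs (chart_w y z - t0) <= r /\
  A1 (chart_u y z) + B1 (chart_w y z) = y /\ A2 (chart_u y z) + B2 (chart_w y z) = z.
Proof.
  intros [Hy Hz]. apply (epsilon_spec (inhabits (0, 0)) (chart_spec y z)).
  destruct (near_identity_surjective t0 r f1 f2 g1 g2 admissible_pos normalized_near_identity
     (n11 * y + n12 * z) (n21 * y + n22 * z)) as [u [w [Hu [Hw [E1 E2]]]]].
  - replace (n11 * y + n12 * z - (f1 t0 + g1 t0)) with (n11 * (y - y0) + n12 * (z - z0))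
      by (unfold f1, g1, y0, z0; ring).
    apply normalized_bound; auto. unfold K. pose proof (Rabs_pos n21). pose proof (Rabs_pos n22). lra.
  - replace (n21 * y + n22 * z - (f2 t0 + g2 t0)) with (n21 * (y - y0) + n22 * (z - z0))
      by (unfold f2, g2, y0, z0; ring).
    apply normalized_bound; auto. unfold K. pose proof (Rabs_pos n11). pose proof (Rabs_pos n12). lra.
  - exists (u, w). unfold chart_spec, f1, f2, g1, g2 in *; simpl.
    destruct (det2_kernel n11 n12 n21 n22 (A1 u + B1 w - y) (A2 u + B2 w - z) normalized_det)
      as [Z1 Z2]; [lra | lra |].
    repeat split; auto; lra.
Qed.

Lemma translation_inverse_Lipschitz u w u' w' :
  Rabs (u - t0) <= r -> Rabs (w - t0) <= r -> Rabs (u' - t0) <= r -> Rabs (w' - t0) <= r ->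
  Rabs (u - u') + Rabs (w - w') <=
    4/3 * K * (Rabs ((A1 u + B1 w) - (A1 u' + B1 w')) + Rabs ((A2 u + B2 w) - (A2 u' + B2 w'))).
Proof.
  intros h1 h2 h3 h4.
  eapply Rle_trans; [apply (near_identity_inverse_Lipschitz t0 r f1 f2 g1 g2 normalized_near_identity); auto|].
  set (X := (A1 u + B1 w) - (A1 u' + B1 w')). set (Y := (A2 u + B2 w) - (A2 u' + B2 w')).
  replace (f1 u + g1 w - (f1 u' + g1 w')) with (n11 * X + n12 * Y) by (unfold X, Y, f1, g1; ring).
  replace (f2 u + g2 w - (f2 u' + g2 w')) with (n21 * X + n22 * Y) by (unfold X, Y, f2, g2; ring).
  pose proof (Rabs_lin2 n11 n12 X Y). pose proof (Rabs_lin2 n21 n22 X Y).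
  pose proof (Rabs_pos X). pose proof (Rabs_pos Y). pose proof (Rabs_pos n11). pose proof (Rabs_pos n12).
  pose proof (Rabs_pos n21). pose proof (Rabs_pos n22). unfold K. nra.
Qed.

Lemma chart_Lipschitz y z y' z' : graph_domain y z -> graph_domain y' z' ->
  Rabs (chart_u y z - chart_u y' z') + Rabs (chart_w y z - chart_w y' z') <=
    4/3 * K * (Rabs (y - y') + Rabs (z - z')).
Proof.
  intros H H'. destruct (chart_correct y z H) as [h1 [h2 [e1 e2]]].
  destruct (chart_correct y' z' H') as [h3 [h4 [e3 e4]]].
  eapply Rle_trans; [apply translation_inverse_Lipschitz; eauto|]. rewrite e1, e2, e3, e4. lra.
Qed.

Lemma graph_domain_near y z : graph_domain y z -> exists d, 0 < d /\
  forall y' z', Rabs (y' - y) < d -> Rabs (z' - z) < d -> graph_domain y' z'.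
Proof.
  intros [Hy Hz]. exists (Rmin (rho - Rabs (y - y0)) (rho - Rabs (z - z0))).
  split; [apply Rmin_pos; lra|].
  intros y' z' H1 H2. pose proof (Rmin_l (rho - Rabs (y - y0)) (rho - Rabs (z - z0))).
  pose proof (Rmin_r (rho - Rabs (y - y0)) (rho - Rabs (z - z0))).
  assert (Rabs (y' - y0) < rho - Rabs (y - y0) + Rabs (y - y0)) by (apply Rabs_shift_lt with y; lra).
  assert (Rabs (z' - z0) < rho - Rabs (z - z0) + Rabs (z - z0)) by (apply Rabs_shift_lt with z; lra).
  split; lra.
Qed.

Lemma graph_domain_open : open2 graph_domain.
Proof. exact graph_domain_near. Qed.

Lemma chart_continuous y z : graph_domain y z ->
  continuous (fun p : R * R => chart_u (fst p) (snd p)) (y, z) /\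
  continuous (fun p : R * R => chart_w (fst p) (snd p)) (y, z).
Proof.
  intros H. destruct (graph_domain_near y z H) as [d [Hd Hd']]. pose proof K_pos.
  assert (Hclose : forall e, 0 < e -> exists d', 0 < d' /\ forall y' z',
      Rabs (y' - y) < d' -> Rabs (z' - z) < d' ->
      Rabs (chart_u y' z' - chart_u y z) + Rabs (chart_w y' z' - chart_w y z) < e).
  { intros e He. exists (Rmin d (e / (3 * K))).
    split; [apply Rmin_pos; [lra | apply Rdiv_lt_0_compat; lra]|].
    intros y' z' H1 H2. pose proof (Rmin_l d (e / (3 * K))). pose proof (Rmin_r d (e / (3 * K))).
    eapply Rle_lt_trans; [apply chart_Lipschitz; [apply Hd'; lra | exact H]|].
    apply Rle_lt_trans with (4/3 * K * (2 * (e / (3 * K)))); [apply Rmult_le_compat_l; lra|].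
    replace (4/3 * K * (2 * (e / (3 * K)))) with (8/9 * e) by (field; lra). lra. }
  split; apply eps_continuous2; intros e He; destruct (Hclose e He) as [d' [Hd0 Hc]];
    exists d'; split; auto; intros y' z' H1 H2; specialize (Hc y' z' H1 H2); simpl;
    pose proof (Rabs_pos (chart_u y' z' - chart_u y z)); pose proof (Rabs_pos (chart_w y' z' - chart_w y z)); lra.
Qed.

Lemma chart_is_derive y z : graph_domain y z ->
  let u := chart_u y z in let w := chart_w y z in
  is_derive (fun s => chart_u s z) y (b2 w / Dl u w) /\
  is_derive (fun s => chart_w s z) y (- a2 u / Dl u w) /\
  is_derive (fun s => chart_u y s) z (- b1 w / Dl u w) /\
  is_derive (fun s => chart_w y s) z (a1 u / Dl u w).
Proof.
  intros H u w.
  destruct (chart_correct y z H) as [Hu [Hw [E1 E2]]]. fold u w in Hu, Hw, E1, E2.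
  destruct (graph_domain_near y z H) as [d [Hd Hd']]. pose proof admissible_pos.
  assert (HD : a1 u * b2 w - b1 w * a2 u <> 0) by (apply Dl_neq0; lra).
  assert (Hu0 : Rabs (u - t0) < R0) by (apply admissible_in_R0; lra).
  assert (Hw0 : Rabs (w - t0) < R0) by (apply admissible_in_R0; lra).
  pose proof (C2_ball_is_derive _ _ _ _ CA1 Hu0). pose proof (C2_ball_is_derive _ _ _ _ CA2 Hu0).
  pose proof (C2_ball_is_derive _ _ _ _ CB1 Hw0). pose proof (C2_ball_is_derive _ _ _ _ CB2 Hw0).
  destruct (implicit_derive A1 A2 B1 B2 (fun s => chart_u s z) (fun s => chart_w s z) y
      (a1 u) (a2 u) (b1 w) (b2 w) 1 0 (4/3 * K) d) as [Dy1 Dy2]; auto.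
  { intros s Hs. assert (Hsz : graph_domain s z) by (apply Hd'; [|rewrite Rminus_eq_0, Rabs_R0]; lra).
    destruct (chart_correct s z Hsz) as [_ [_ [E1' E2']]]. fold u w.
    pose proof (chart_Lipschitz s z y z Hsz H) as L. rewrite Rminus_eq_0, Rabs_R0 in L. fold u w in L.
    repeat split; lra. }
  destruct (implicit_derive A1 A2 B1 B2 (fun s => chart_u y s) (fun s => chart_w y s) z
      (a1 u) (a2 u) (b1 w) (b2 w) 0 1 (4/3 * K) d) as [Dz1 Dz2]; auto.
  { intros s Hs. assert (Hys : graph_domain y s) by (apply Hd'; [rewrite Rminus_eq_0, Rabs_R0|]; lra).
    destruct (chart_correct y s Hys) as [_ [_ [E1' E2']]]. fold u w.
    pose proof (chart_Lipschitz y s y z Hys H) as L. rewrite Rminus_eq_0, Rabs_R0 in L. fold u w in L.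
    repeat split; lra. }
  split; [|split; [|split]]; (eapply is_derive_eq; [eassumption | unfold Dl; field; exact HD]).
Qed.

Definition C1_box (Phi Phiu Phiw : R -> R -> R) :=
  (forall u w, Rabs (u - t0) < 2 * r -> Rabs (w - t0) < 2 * r ->
     is_derive (fun x => Phi x w) u (Phiu u w) /\ is_derive (fun x => Phi u x) w (Phiw u w)) /\
  (forall u w, Rabs (u - t0) <= r -> Rabs (w - t0) <= r ->
     continuous (fun p : R * R => Phiu (fst p) (snd p)) (u, w) /\
     continuous (fun p : R * R => Phiw (fst p) (snd p)) (u, w)).

(* The inverse of the Jacobian of (u, w) |-> (A1 u + B1 w, A2 u + B2 w), i.e. the Jacobian
   of the chart (y, z) |-> (u, w). *)
Let jyu u w := b2 w / Dl u w.
Let jyw u w := - a2 u / Dl u w.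
Let jzu u w := - b1 w / Dl u w.
Let jzw u w := a1 u / Dl u w.

Definition chart_dy (Phiu Phiw : R -> R -> R) u w := Phiu u w * jyu u w + Phiw u w * jyw u w.
Definition chart_dz (Phiu Phiw : R -> R -> R) u w := Phiu u w * jzu u w + Phiw u w * jzw u w.

Lemma chart_comp_is_derive Phi Phiu Phiw : C1_box Phi Phiu Phiw -> forall y z, graph_domain y z ->
  is_derive (fun s => Phi (chart_u s z) (chart_w s z)) y
    (chart_dy Phiu Phiw (chart_u y z) (chart_w y z)) /\
  is_derive (fun s => Phi (chart_u y s) (chart_w y s)) z
    (chart_dz Phiu Phiw (chart_u y z) (chart_w y z)).
Proof.
  intros [HP HC] y z H.
  destruct (chart_correct y z H) as [Hu [Hw _]].
  destruct (chart_is_derive y z H) as [D1 [D2 [D3 D4]]].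
  set (u := chart_u y z) in *. set (w := chart_w y z) in *. pose proof admissible_pos.
  assert (Hn : exists d, 0 < d /\ forall u' w', Rabs (u' - u) < d -> Rabs (w' - w) < d ->
      is_derive (fun x => Phi x w') u' (Phiu u' w')).
  { exists r. split; [lra|]. intros u' w' H1 H2. replace (2 * r) with (r + r) in HP by ring.
    apply HP; [apply Rabs_shift_lt with u | apply Rabs_shift_lt with w]; lra. }
  destruct (HP u w ltac:(lra) ltac:(lra)) as [_ Pw].
  destruct (HC u w Hu Hw) as [Cu _].
  split; apply (is_derive_comp_2d Phi Phiu); auto.
Qed.

Lemma derivatives_continuous2 u w : Rabs (u - t0) <= 2 * r -> Rabs (w - t0) <= 2 * r ->
  continuous (fun p : R * R => a1 (fst p)) (u, w) /\ continuous (fun p : R * R => a2 (fst p)) (u, w) /\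
  continuous (fun p : R * R => b1 (snd p)) (u, w) /\ continuous (fun p : R * R => b2 (snd p)) (u, w).
Proof.
  intros Hu Hw. apply admissible_in_R0 in Hu. apply admissible_in_R0 in Hw.
  repeat split; (apply continuous_fst_comp || apply continuous_snd_comp);
    eapply C2_ball_continuous1; eassumption.
Qed.

Lemma chart_derivative_continuous Phiu Phiw u w : Rabs (u - t0) <= r -> Rabs (w - t0) <= r ->
  continuous (fun p : R * R => Phiu (fst p) (snd p)) (u, w) ->
  continuous (fun p : R * R => Phiw (fst p) (snd p)) (u, w) ->
  continuous (fun p : R * R => chart_dy Phiu Phiw (fst p) (snd p)) (u, w) /\
  continuous (fun p : R * R => chart_dz Phiu Phiw (fst p) (snd p)) (u, w).
Proof.
  intros Hu Hw Cu Cw. pose proof admissible_pos.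
  destruct (derivatives_continuous2 u w ltac:(lra) ltac:(lra)) as [C1 [C2 [C3 C4]]].
  assert (HD : Dl u w <> 0) by (apply Dl_neq0; lra).
  unfold chart_dy, chart_dz, jyu, jyw, jzu, jzw, Dl.
  split; repeat first [assumption | continuous_step].
Qed.

Lemma chart_comp_C1 Phi Phiu Phiw (f : R -> R -> R) : C1_box Phi Phiu Phiw ->
  (forall y z, graph_domain y z -> f y z = Phi (chart_u y z) (chart_w y z)) ->
  C1_on graph_domain f /\ (forall y z, graph_domain y z ->
     pu f y z = chart_dy Phiu Phiw (chart_u y z) (chart_w y z) /\
     pv f y z = chart_dz Phiu Phiw (chart_u y z) (chart_w y z)).
Proof.
  intros HP Hf. apply C1_on_of_partials; [exact graph_domain_open | |].
  - intros y z H. destruct (chart_comp_is_derive Phi Phiu Phiw HP y z H) as [D1 D2].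
    destruct (graph_domain_near y z H) as [d [Hd Hd']].
    split; [apply (is_derive_ext_loc (fun s => Phi (chart_u s z) (chart_w s z)))
           | apply (is_derive_ext_loc (fun s => Phi (chart_u y s) (chart_w y s)))]; auto;
      apply locally_of_ball; exists d; split; auto; intros s Hs; symmetry; apply Hf, Hd';
      rewrite ?Rminus_eq_0, ?Rabs_R0; auto.
  - intros y z H.
    destruct (chart_correct y z H) as [Hu [Hw _]]. destruct (chart_continuous y z H) as [Cu Cw].
    destruct HP as [_ HC]. destruct (HC _ _ Hu Hw) as [CPu CPw].
    destruct (chart_derivative_continuous _ _ _ _ Hu Hw CPu CPw) as [Cdy Cdz].
    split; apply (continuous_comp_2 (fun p : R * R => chart_u (fst p) (snd p))
      (fun p : R * R => chart_w (fst p) (snd p))); auto.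
Qed.

Let ad1 := Derive a1. Let ad2 := Derive a2. Let adx := Derive ax.
Let bd1 := Derive b1. Let bd2 := Derive b2. Let bdx := Derive bx.
Let Dlu u w := ad1 u * b2 w - b1 w * ad2 u.
Let Dlw u w := a1 u * bd2 w - bd1 w * a2 u.

(* psi_y and psi_z at X(u, w), and their partial derivatives in u and w. *)
Definition graph_py := chart_dy (fun u _ => ax u) (fun _ w => bx w).
Definition graph_pz := chart_dz (fun u _ => ax u) (fun _ w => bx w).
Definition graph_py_u u w := adx u * (b2 w / Dl u w) + ax u * (- b2 w * Dlu u w / (Dl u w * Dl u w))
   + bx w * ((- ad2 u * Dl u w + a2 u * Dlu u w) / (Dl u w * Dl u w)).
Definition graph_py_w u w := ax u * ((bd2 w * Dl u w - b2 w * Dlw u w) / (Dl u w * Dl u w))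
   + bdx w * (- a2 u / Dl u w) + bx w * (a2 u * Dlw u w / (Dl u w * Dl u w)).
Definition graph_pz_u u w := adx u * (- b1 w / Dl u w) + ax u * (b1 w * Dlu u w / (Dl u w * Dl u w))
   + bx w * ((ad1 u * Dl u w - a1 u * Dlu u w) / (Dl u w * Dl u w)).
Definition graph_pz_w u w := ax u * ((- bd1 w * Dl u w + b1 w * Dlw u w) / (Dl u w * Dl u w))
   + bdx w * (a1 u / Dl u w) + bx w * (- a1 u * Dlw u w / (Dl u w * Dl u w)).

Ltac continuous_box :=
  cbv beta; repeat first
    [ assumption
    | match goal with
      | |- continuous (fun p : R * R => ?h (fst p)) _ => apply (continuous_fst_comp h)
      | |- continuous (fun p : R * R => ?h (snd p)) _ => apply (continuous_snd_comp h)
      | |- continuous ?h ?x =>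
          match type of x with R => idtac end;
          unfold adx, ad1, ad2, bdx, bd1, bd2, ax, a1, a2, bx, b1, b2; simpl;
          lazymatch goal with
          | |- continuous (Derive (Derive ?f)) ?x => apply (C2_ball_continuous2 f t0 R0 x)
          | |- continuous (Derive ?f) ?x => apply (C2_ball_continuous1 f t0 R0 x)
          end; [assumption | apply admissible_in_R0; lra]
      end
    | continuous_step ].

Ltac Dl_neq0_box := simpl;
  first [ apply Rmult_integral_contrapositive_currified; apply Dl_neq0; lra | apply Dl_neq0; lra ].

Ltac ex_derive_box := match goal with |- ex_derive (fun x => ?g x) ?y => change (ex_derive g y) end;
  unfold adx, ad1, ad2, bdx, bd1, bd2, ax, a1, a2, bx, b1, b2;
  lazymatch goal with
  | |- ex_derive (Derive ?f) ?x => apply (C2_ball_ex_derive2 f t0 R0 x)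
  | |- ex_derive ?f ?x => apply (C2_ball_ex_derive f t0 R0 x)
  end; assumption.

Lemma graph_value_C1 : C1_box (fun u w => Ax u + Bx w) (fun u _ => ax u) (fun _ w => bx w).
Proof.
  pose proof admissible_pos. split.
  - intros u w Hu Hw.
    assert (Hu' : Rabs (u - t0) < R0) by (apply admissible_in_R0; lra).
    assert (Hw' : Rabs (w - t0) < R0) by (apply admissible_in_R0; lra).
    split; auto_derive; [apply (CAx u Hu') | unfold ax; eta_Derive; ring
                        | apply (CBx w Hw') | unfold bx; eta_Derive; ring].
  - intros u w Hu Hw. split; continuous_box.
Qed.

Lemma graph_py_C1 : C1_box graph_py graph_py_u graph_py_w.
Proof.
  pose proof admissible_pos. split.
  - intros u w Hu Hw.
    assert (Hu' : Rabs (u - t0) < R0) by (apply admissible_in_R0; lra).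
    assert (Hw' : Rabs (w - t0) < R0) by (apply admissible_in_R0; lra).
    assert (HD : Dl u w <> 0) by (apply Dl_neq0; lra).
    unfold graph_py, chart_dy, jyu, jyw, graph_py_u, graph_py_w, Dlu, Dlw. unfold Dl in *. split.
    + auto_derive; [repeat split; try exact HD; ex_derive_box|].
      unfold ad1, ad2, adx, ax, a1, a2, bx, b1, b2. eta_Derive. field. exact HD.
    + auto_derive; [repeat split; try exact HD; ex_derive_box|].
      unfold bd1, bd2, bdx, bx, b1, b2, ax, a1, a2. eta_Derive. field. exact HD.
  - intros u w Hu Hw. unfold graph_py_u, graph_py_w, Dlu, Dlw, Dl.
    split; continuous_box; Dl_neq0_box.
Qed.

Lemma graph_pz_C1 : C1_box graph_pz graph_pz_u graph_pz_w.
Proof.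
  pose proof admissible_pos. split.
  - intros u w Hu Hw.
    assert (Hu' : Rabs (u - t0) < R0) by (apply admissible_in_R0; lra).
    assert (Hw' : Rabs (w - t0) < R0) by (apply admissible_in_R0; lra).
    assert (HD : Dl u w <> 0) by (apply Dl_neq0; lra).
    unfold graph_pz, chart_dz, jzu, jzw, graph_pz_u, graph_pz_w, Dlu, Dlw. unfold Dl in *. split.
    + auto_derive; [repeat split; try exact HD; ex_derive_box|].
      unfold ad1, ad2, adx, ax, a1, a2, bx, b1, b2. eta_Derive. field. exact HD.
    + auto_derive; [repeat split; try exact HD; ex_derive_box|].
      unfold bd1, bd2, bdx, bx, b1, b2, ax, a1, a2. eta_Derive. field. exact HD.
  - intros u w Hu Hw. unfold graph_pz_u, graph_pz_w, Dlu, Dlw, Dl.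
    split; continuous_box; Dl_neq0_box.
Qed.

Lemma graph_domain_box : exists rho, 0 < rho /\ forall y z,
  Rabs (y - (A1 t0 + B1 t0)) < rho -> Rabs (z - (A2 t0 + B2 t0)) < rho -> graph_domain y z.
Proof. exists rho. split; [exact rho_pos | intros y z Hy Hz; split; assumption]. Qed.

Definition graph_function y z := Ax (chart_u y z) + Bx (chart_w y z).

Lemma graph_function_C1 : C1_on graph_domain graph_function /\ (forall y z, graph_domain y z ->
  pu graph_function y z = graph_py (chart_u y z) (chart_w y z) /\
  pv graph_function y z = graph_pz (chart_u y z) (chart_w y z)).
Proof. apply (chart_comp_C1 _ _ _ _ graph_value_C1). reflexivity. Qed.

Lemma graph_function_pu_C1 : C1_on graph_domain (pu graph_function) /\
  (forall y z, graph_domain y z ->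
    pu (pu graph_function) y z = chart_dy graph_py_u graph_py_w (chart_u y z) (chart_w y z) /\
    pv (pu graph_function) y z = chart_dz graph_py_u graph_py_w (chart_u y z) (chart_w y z)).
Proof. apply (chart_comp_C1 _ _ _ _ graph_py_C1). apply graph_function_C1. Qed.

Lemma graph_function_pv_C1 : C1_on graph_domain (pv graph_function) /\
  (forall y z, graph_domain y z ->
    pu (pv graph_function) y z = chart_dy graph_pz_u graph_pz_w (chart_u y z) (chart_w y z) /\
    pv (pv graph_function) y z = chart_dz graph_pz_u graph_pz_w (chart_u y z) (chart_w y z)).
Proof. apply (chart_comp_C1 _ _ _ _ graph_pz_C1). apply graph_function_C1. Qed.

Lemma graph_function_BI : BI_soliton graph_domain graph_function.
Proof.
  split; [exact graph_domain_open|].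
  split; [split; [apply graph_function_C1 | split; [apply graph_function_pu_C1 | apply graph_function_pv_C1]]|].
  intros y z H.
  destruct (proj2 graph_function_C1 y z H) as [-> ->].
  destruct (proj2 graph_function_pu_C1 y z H) as [-> ->].
  destruct (proj2 graph_function_pv_C1 y z H) as [_ ->].
  destruct (chart_correct y z H) as [Hu [Hw _]].
  set (u := chart_u y z) in *. set (w := chart_w y z) in *. pose proof admissible_pos.
  assert (HD : Dl u w <> 0) by (apply Dl_neq0; lra).
  pose proof (nullA u ltac:(apply admissible_in_R0; lra)) as NA.
  pose proof (nullB w ltac:(apply admissible_in_R0; lra)) as NB.
  unfold chart_dy, chart_dz, jyu, jyw, jzu, jzw. unfold Dl in HD.
  apply (BI_operator_null_translation (a1 u) (a2 u) (ax u) (b1 w) (b2 w) (bx w)); auto;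
    unfold graph_py, graph_pz, graph_py_u, graph_py_w, graph_pz_u, graph_pz_w, chart_dy, chart_dz,
      jyu, jyw, jzu, jzw, Dlu, Dlw, Dl; field; exact HD.
Qed.

End AdmissibleRadius.

Lemma null_translation_local_graph : exists r, 0 < r /\
  (forall u w, Rabs (u - t0) < r -> Rabs (w - t0) < r ->
     Derive A1 u * Derive B2 w - Derive B1 w * Derive A2 u <> 0) /\
  exists (D : R -> R -> Prop) (psi : R -> R -> R), BI_soliton D psi /\
    forall u w, Rabs (u - t0) < r -> Rabs (w - t0) < r ->
      D (A1 u + B1 w) (A2 u + B2 w) /\ Ax u + Bx w = psi (A1 u + B1 w) (A2 u + B2 w).
Proof.
  destruct admissible_radius_exists as [r Hr]. pose proof (admissible_pos r Hr).
  destruct (graph_domain_box r Hr) as [rho [Hrho Hbox]].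
  assert (Ht : Rabs (t0 - t0) < R0) by (rewrite Rminus_eq_0, Rabs_R0; lra).
  assert (Hr2 : 0 < rho / 2) by lra.
  destruct (continuous_eps _ _ (C2_ball_continuous _ _ _ _ CA1 Ht) _ Hr2) as [d1 [Hd1 H1]].
  destruct (continuous_eps _ _ (C2_ball_continuous _ _ _ _ CA2 Ht) _ Hr2) as [d2 [Hd2 H2]].
  destruct (continuous_eps _ _ (C2_ball_continuous _ _ _ _ CB1 Ht) _ Hr2) as [d3 [Hd3 H3]].
  destruct (continuous_eps _ _ (C2_ball_continuous _ _ _ _ CB2 Ht) _ Hr2) as [d4 [Hd4 H4]].
  destruct (Rmin4_pos _ _ _ _ Hd1 Hd2 Hd3 Hd4) as [Hm [m1 [m2 [m3 m4]]]].
  pose proof (Rmin_l (Rmin (Rmin d1 d2) (Rmin d3 d4)) r). pose proof (Rmin_r (Rmin (Rmin d1 d2) (Rmin d3 d4)) r).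
  set (m := Rmin (Rmin (Rmin d1 d2) (Rmin d3 d4)) r) in *.
  exists m. split; [apply Rmin_pos; lra|]. split.
  { intros u w Hu Hw. apply (Dl_neq0 r Hr u w); lra. }
  exists (graph_domain r), (graph_function r). split; [apply graph_function_BI, Hr|].
  intros u w Hu Hw.
  assert (HD : graph_domain r (A1 u + B1 w) (A2 u + B2 w)).
  { specialize (H1 u ltac:(lra)). specialize (H2 u ltac:(lra)).
    specialize (H3 w ltac:(lra)). specialize (H4 w ltac:(lra)).
    apply Hbox; [ replace (A1 u + B1 w - (A1 t0 + B1 t0)) with ((A1 u - A1 t0) + (B1 w - B1 t0)) by ring
           | replace (A2 u + B2 w - (A2 t0 + B2 t0)) with ((A2 u - A2 t0) + (B2 w - B2 t0)) by ring ];
      eapply Rle_lt_trans; [apply Rabs_triang | | apply Rabs_triang |]; lra. }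
  split; [exact HD|].
  destruct (chart_correct r Hr _ _ HD) as [Hu' [Hw' [E1 E2]]].
  pose proof (translation_inverse_Lipschitz r Hr _ _ u w Hu' Hw' ltac:(lra) ltac:(lra)) as Inj.
  rewrite E1, E2, !Rminus_eq_0, Rabs_R0, Rplus_0_r, Rmult_0_r in Inj.
  pose proof (Rabs_pos (chart_u r (A1 u + B1 w) (A2 u + B2 w) - u)).
  pose proof (Rabs_pos (chart_w r (A1 u + B1 w) (A2 u + B2 w) - w)).
  assert (Z1 : chart_u r (A1 u + B1 w) (A2 u + B2 w) = u) by (apply Rminus_diag_uniq, Rabs_eq_0; lra).
  assert (Z2 : chart_w r (A1 u + B1 w) (A2 u + B2 w) = w) by (apply Rminus_diag_uniq, Rabs_eq_0; lra).
  unfold graph_function. rewrite Z1, Z2. reflexivity.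
Qed.

End NullTranslationGraph.

(** * Real analytic functions *)

Lemma is_pseries_CV_radius (c : nat -> R) s l x :
  is_pseries c s l -> Rabs x < Rabs s -> Rbar_lt (Rabs x) (CV_radius c).
Proof.
  intros Hs Hx. apply (Rbar_lt_le_trans _ (Rabs s)); [exact Hx|].
  apply Rbar_not_lt_le. intros Hlt. apply (CV_disk_outside c s Hlt).
  apply (is_lim_seq_ext (fun k => scal (pow_n s k) (c k))).
  - intros k. rewrite pow_n_pow. apply Rmult_comm.
  - apply ex_series_lim_0. exists l. exact Hs.
Qed.

Lemma analytic_at_radius f t0 : analytic_at f t0 -> exists r, 0 < r /\ exists c,
  (forall x, Rabs x < r -> Rbar_lt (Rabs x) (CV_radius c)) /\
  forall t, Rabs (t - t0) < r -> is_pseries c (t - t0) (f t).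
Proof.
  intros [r [Hr [c Hc]]]. exists r. split; [exact Hr|]. exists c. split; [|exact Hc].
  intros x Hx. set (s := (Rabs x + r) / 2).
  apply (is_pseries_CV_radius c s (f (s + t0))).
  - replace s with (s + t0 - t0) at 1 by ring. apply Hc.
    replace (s + t0 - t0) with s by ring. unfold s. rewrite Rabs_right; pose proof (Rabs_pos x); lra.
  - unfold s. rewrite (Rabs_right ((Rabs x + r) / 2)); pose proof (Rabs_pos x); lra.
Qed.

Lemma is_derive_PSeries_shift c t0 t : Rbar_lt (Rabs (t - t0)) (CV_radius c) ->
  is_derive (fun s => PSeries c (s - t0)) t (PSeries (PS_derive c) (t - t0)).
Proof.
  intros Hc. eapply is_derive_eq.
  - apply (is_derive_comp (PSeries c) (fun s => s - t0)); [apply is_derive_PSeries, Hc|].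
    auto_derive; auto.
  - simpl. unfold scal; simpl; unfold mult; simpl. ring.
Qed.

Lemma analytic_at_is_derive f t0 : analytic_at f t0 -> exists r, 0 < r /\ exists c,
  (forall x, Rabs x < r -> Rbar_lt (Rabs x) (CV_radius c)) /\
  forall t, Rabs (t - t0) < r -> is_derive f t (PSeries (PS_derive c) (t - t0)).
Proof.
  intros H. destruct (analytic_at_radius f t0 H) as [r [Hr [c [Hrad Hc]]]].
  exists r. split; [exact Hr|]. exists c. split; [exact Hrad|]. intros t Ht.
  apply (is_derive_ext_loc (fun s => PSeries c (s - t0))); [|apply is_derive_PSeries_shift, Hrad, Ht].
  apply locally_of_ball. exists (r - Rabs (t - t0)). split; [lra|]. intros s Hs.
  apply is_pseries_unique, Hc. replace r with (r - Rabs (t - t0) + Rabs (t - t0)) by ring.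
  apply Rabs_shift_lt with t; lra.
Qed.

Lemma analytic_at_ex_derive f t0 : analytic_at f t0 -> ex_derive f t0.
Proof.
  intros H. destruct (analytic_at_is_derive f t0 H) as [r [Hr [c [_ Hc]]]].
  eexists. apply Hc. rewrite Rminus_eq_0, Rabs_R0. exact Hr.
Qed.

Lemma analytic_at_Derive f t0 : analytic_at f t0 -> analytic_at (Derive f) t0.
Proof.
  intros H. destruct (analytic_at_is_derive f t0 H) as [r [Hr [c [Hrad Hc]]]].
  exists r. split; [exact Hr|]. exists (PS_derive c). intros t Ht.
  rewrite (is_derive_unique _ _ _ (Hc t Ht)).
  apply PSeries_correct, CV_radius_inside. rewrite CV_radius_derive. apply Hrad, Ht.
Qed.

Lemma analytic_at_C1 f t0 : analytic_at f t0 -> ex_derive f t0 /\ continuous (Derive f) t0.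
Proof.
  intros H. split; [apply analytic_at_ex_derive, H|].
  apply ex_derive_continuous_R, analytic_at_ex_derive, analytic_at_Derive, H.
Qed.

Lemma analytic_at_lin (p q : R) f g t0 : analytic_at f t0 -> analytic_at g t0 ->
  analytic_at (fun t => p * f t + q * g t) t0.
Proof.
  intros [r1 [Hr1 [c1 H1]]] [r2 [Hr2 [c2 H2]]].
  exists (Rmin r1 r2). split; [apply Rmin_pos; auto|].
  exists (PS_plus (PS_scal p c1) (PS_scal q c2)). intros t Ht.
  pose proof (Rmin_l r1 r2). pose proof (Rmin_r r1 r2).
  apply (is_pseries_plus (PS_scal p c1) (PS_scal q c2) _ (p * f t) (q * g t));
    [ apply (is_pseries_scal (V := R_NormedModule) p c1 _ (f t)), H1
    | apply (is_pseries_scal (V := R_NormedModule) q c2 _ (g t)), H2 ];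
    solve [apply Rmult_comm | lra].
Qed.

Lemma analytic_at_mult f g t0 : analytic_at f t0 -> analytic_at g t0 ->
  analytic_at (fun t => f t * g t) t0.
Proof.
  intros Hf Hg.
  destruct (analytic_at_radius f t0 Hf) as [r1 [Hr1 [c1 [R1 H1]]]].
  destruct (analytic_at_radius g t0 Hg) as [r2 [Hr2 [c2 [R2 H2]]]].
  exists (Rmin r1 r2). split; [apply Rmin_pos; auto|].
  exists (PS_mult c1 c2). intros t Ht.
  pose proof (Rmin_l r1 r2). pose proof (Rmin_r r1 r2).
  apply is_pseries_mult; [apply H1 | apply H2 | apply R1 | apply R2]; lra.
Qed.

Lemma analytic_at_ext f g t0 : (forall t, f t = g t) -> analytic_at f t0 -> analytic_at g t0.
Proof. intros E [r [Hr [c Hc]]]. exists r. split; [exact Hr|]. exists c. intros t Ht. rewrite <- E. auto. Qed.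

Lemma in_interval_ball a b t : in_interval a b t ->
  exists e, 0 < e /\ forall s, Rabs (s - t) < e -> in_interval a b s.
Proof.
  intros [Ha Hb].
  assert (Hl : exists e, 0 < e /\ forall s, Rabs (s - t) < e -> Rbar_lt a s).
  { destruct a as [a| |]; simpl in *; [exists (t - a) | contradiction | exists 1];
      split; try lra; intros s Hs; apply Rabs_lt_between' in Hs; simpl; auto; lra. }
  assert (Hu : exists e, 0 < e /\ forall s, Rabs (s - t) < e -> Rbar_lt s b).
  { destruct b as [b| |]; simpl in *; [exists (b - t) | exists 1 | contradiction];
      split; try lra; intros s Hs; apply Rabs_lt_between' in Hs; simpl; auto; lra. }
  destruct Hl as [e1 [He1 H1]]. destruct Hu as [e2 [He2 H2]].
  exists (Rmin e1 e2). split; [apply Rmin_pos; auto|]. intros s Hs.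
  pose proof (Rmin_l e1 e2). pose proof (Rmin_r e1 e2). split; [apply H1 | apply H2]; lra.
Qed.

Lemma in_interval_locally a b t : in_interval a b t -> locally t (in_interval a b).
Proof. intros Ht. apply locally_of_ball, (in_interval_ball a b t Ht). Qed.

Lemma in_interval_segment a b x y z : in_interval a b x -> in_interval a b y ->
  Rmin x y <= z <= Rmax x y -> in_interval a b z.
Proof.
  intros [Hx1 Hx2] [Hy1 Hy2] Hz.
  assert (Hz' : Rmin x y <= z <= Rmax x y) by exact Hz. unfold Rmin, Rmax in Hz'.
  split; [destruct a as [a| |] | destruct b as [b| |]]; simpl in *; auto;
    destruct Rle_dec; lra.
Qed.

Lemma in_interval_inhabited a b : Rbar_lt a b -> exists t, in_interval a b t.
Proof.
  destruct a as [a| |]; destruct b as [b| |]; intros H; simpl in *; try contradiction.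
  - exists ((a + b) / 2). split; simpl; lra.
  - exists (a + 1). split; simpl; auto; lra.
  - exists (b - 1). split; simpl; auto; lra.
  - exists 0. split; simpl; auto.
Qed.

Lemma is_derive_RInt_in_interval a b (f : R -> R) t0 s :
  (forall t, in_interval a b t -> continuous f t) -> in_interval a b t0 -> in_interval a b s ->
  is_derive (fun s => RInt f t0 s) s (f s).
Proof.
  intros Hf Ht0 Hs. apply (is_derive_RInt f _ t0); [|apply Hf, Hs].
  generalize (in_interval_locally a b s Hs). apply filter_imp. intros x Hx.
  apply (RInt_correct f t0 x), ex_RInt_continuous. intros z Hz. apply Hf, (in_interval_segment a b t0 x); auto.
Qed.

Lemma C2_of_derivative (I : R -> Prop) (f h : R -> R) :
  (forall t, I t -> locally t I) ->
  (forall t, I t -> is_derive f t (h t)) ->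
  (forall t, I t -> ex_derive h t /\ continuous (Derive h) t) ->
  forall t, I t -> ex_derive f t /\ ex_derive (Derive f) t /\ continuous (Derive (Derive f)) t.
Proof.
  intros Hloc Hf Hh t Ht.
  assert (E : locally t (fun s => h s = Derive f s)).
  { generalize (Hloc t Ht). apply filter_imp. intros s Hs. symmetry. apply is_derive_unique, Hf, Hs. }
  destruct (Hh t Ht) as [Dh Ch].
  split; [eexists; apply Hf, Ht|]. split.
  - destruct Dh as [l Dh]. exists l. apply (is_derive_ext_loc h); auto.
  - apply (continuous_ext_loc _ (Derive h)); auto.
    generalize (Hloc t Ht). apply filter_imp. intros s Hs. apply Derive_ext_loc.
    generalize (Hloc s Hs). apply filter_imp. intros v Hv. symmetry. apply is_derive_unique, Hf, Hv.
Qed.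

Lemma translation_surface_C1 (I : R -> Prop) (O : R -> R -> Prop) (A B : R -> R) :
  open2 O -> (forall s t, O s t -> I (s + t) /\ I (s - t)) ->
  (forall u, I u -> ex_derive A u /\ continuous (Derive A) u) ->
  (forall u, I u -> ex_derive B u /\ continuous (Derive B) u) ->
  C1_on O (fun s t => A (s + t) + B (s - t)) /\
  (forall s t, O s t ->
     pu (fun s t => A (s + t) + B (s - t)) s t = Derive A (s + t) + Derive B (s - t) /\
     pv (fun s t => A (s + t) + B (s - t)) s t = Derive A (s + t) - Derive B (s - t)).
Proof.
  intros Hop HO HA HB.
  apply (C1_on_of_partials O _ (fun s t => Derive A (s + t) + Derive B (s - t))
    (fun s t => Derive A (s + t) - Derive B (s - t))); [exact Hop | |];
    intros s t H; destruct (HO s t H) as [H1 H2];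
    destruct (HA _ H1) as [DA CA]; destruct (HB _ H2) as [DB CB].
  - split; auto_derive; auto; eta_Derive; unfold Rminus; ring.
  - assert (Cplus : continuous (fun p : R * R => fst p + snd p) (s, t))
      by (apply (continuous_plus (fun p : R * R => fst p) snd); [apply continuous_fst | apply continuous_snd]).
    assert (Cminus : continuous (fun p : R * R => fst p - snd p) (s, t))
      by (apply (continuous_minus (fun p : R * R => fst p) snd); [apply continuous_fst | apply continuous_snd]).
    split; continuous_step; apply (continuous_comp _ (Derive _)); assumption.
Qed.

(** * The Bjorling surface *)

(* The Lorentzian cross product, characterized by lprod (lcross p q) r = det (p, q, r). *)
Definition lcross (p q : V3) : V3 :=
  mk3 (vy p * vz q - vz p * vy q) (vz p * vx q - vx p * vz q) (vy p * vx q - vx p * vy q).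

Lemma lcross_orthogonal p q : lprod p (lcross p q) = 0 /\ lprod q (lcross p q) = 0.
Proof. unfold lprod, lcross, mk3, vx, vy, vz; simpl. split; ring. Qed.

(* Along the curve, v = c' and m = n x c' satisfy <m, m> = - <v, v> and <v, m> = 0, so
   (v + m) / 2 and (v - m) / 2 are lightlike. *)
Lemma lcross_null_half_sum (p v : V3) (sg : R) :
  lprod p p = 1 -> lprod p v = 0 -> sg ^ 2 = 1 ->
  ((vx v + sg * vx (lcross p v)) / 2) ^ 2 + ((vy v + sg * vy (lcross p v)) / 2) ^ 2
  - ((vz v + sg * vz (lcross p v)) / 2) ^ 2 = 0.
Proof.
  intros N O S.
  transitivity ((lprod v v * (1 - sg ^ 2 * lprod p p) + sg ^ 2 * lprod p v ^ 2) / 4).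
  - unfold lprod, lcross, mk3, vx, vy, vz; simpl. field.
  - rewrite N, O, S. field.
Qed.

Lemma lcross_projection_nondegenerate (p v : V3) :
  lprod p p = 1 -> lprod p v = 0 -> lprod v v <> 0 ->
  vy v * vz (lcross p v) - vz v * vy (lcross p v) <> 0 \/
  vx v * vz (lcross p v) - vz v * vx (lcross p v) <> 0.
Proof.
  intros N O C.
  assert (L : (vy v * vz (lcross p v) - vz v * vy (lcross p v)) ^ 2
            + (vx v * vz (lcross p v) - vz v * vx (lcross p v)) ^ 2
            = lprod v v * (lprod v v * lprod p p - lprod p v ^ 2)
            + (vx v * vy (lcross p v) - vy v * vx (lcross p v)) ^ 2).
  { unfold lprod, lcross, mk3, vx, vy, vz; simpl. ring. }
  rewrite N, O in L.
  destruct (Req_dec (vy v * vz (lcross p v) - vz v * vy (lcross p v)) 0) as [E1|E1]; [|left; exact E1].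
  destruct (Req_dec (vx v * vz (lcross p v) - vz v * vx (lcross p v)) 0) as [E2|E2]; [|right; exact E2].
  exfalso. apply C. rewrite E1, E2 in L.
  pose proof (pow2_ge_0 (vx v * vy (lcross p v) - vy v * vx (lcross p v))).
  assert (H2 : lprod v v * lprod v v = 0) by nra. apply Rmult_integral in H2 as [H2|H2]; exact H2.
Qed.

Lemma analytic_on_lcross (I : R -> Prop) (p q : R -> V3) : analytic_curve I p -> analytic_curve I q ->
  analytic_curve I (fun t => lcross (p t) (q t)).
Proof.
  intros [Px [Py Pz]] [Qx [Qy Qz]].
  assert (Hcomb : forall f1 g1 f2 g2, analytic_on I f1 -> analytic_on I g1 -> analytic_on I f2 ->
      analytic_on I g2 -> analytic_on I (fun t => f1 t * g1 t - f2 t * g2 t)).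
  { intros f1 g1 f2 g2 H1 H2 H3 H4 t Ht.
    apply (analytic_at_ext (fun t => 1 * (f1 t * g1 t) + -1 * (f2 t * g2 t))); [intros; ring|].
    apply analytic_at_lin; apply analytic_at_mult; auto. }
  unfold lcross, mk3, vx, vy, vz; simpl. repeat split; apply Hcomb; assumption.
Qed.

Lemma analytic_on_dcurve (I : R -> Prop) (p : R -> V3) : analytic_curve I p ->
  analytic_curve I (dcurve p).
Proof.
  intros [Px [Py Pz]]. unfold dcurve, mk3, vx, vy, vz; simpl.
  repeat split; intros t Ht; apply analytic_at_Derive; [apply Px | apply Py | apply Pz]; exact Ht.
Qed.

Section Bjorling.
Variables (a b : Rbar) (c n : R -> V3) (ts : R).
Let I := in_interval a b.
Hypothesis Hts : I ts.
Hypothesis hc_an : analytic_curve I c.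
Hypothesis hn_an : analytic_curve I n.
Hypothesis hc_type : (forall t, I t -> 0 < lprod (dcurve c t) (dcurve c t)) \/
                     (forall t, I t -> lprod (dcurve c t) (dcurve c t) < 0).
Hypothesis hn_unit : forall t, I t -> lprod (n t) (n t) = 1.
Hypothesis hn_orth : forall t, I t -> lprod (n t) (dcurve c t) = 0.

Let m t := lcross (n t) (dcurve c t).

Lemma normal_tangent_analytic : analytic_curve I m.
Proof. apply analytic_on_lcross; [exact hn_an | apply analytic_on_dcurve, hc_an]. Qed.

Section HalfCurve.
Variables (C M : R -> R) (sg : R).
Hypotheses (HC : analytic_on I C) (HM : analytic_on I M).

Definition half_curve s := (C s + sg * RInt M ts s) / 2.

Lemma half_curve_is_derive t : I t -> is_derive half_curve t ((Derive C t + sg * M t) / 2).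
Proof.
  intros Ht.
  assert (DM := is_derive_RInt_in_interval a b M ts t
    (fun s Hs => ex_derive_continuous_R _ _ (analytic_at_ex_derive _ _ (HM s Hs))) Hts Ht).
  destruct (analytic_at_ex_derive _ _ (HC t Ht)) as [l DC].
  unfold half_curve. set (G s := RInt M ts s) in *.
  auto_derive.
  - split; [exists l; exact DC | split; [eexists; exact DM | trivial]].
  - eta_Derive. rewrite (is_derive_unique G t (M t) DM). field.
Qed.

Lemma half_curve_Derive t : I t -> Derive half_curve t = (Derive C t + sg * M t) / 2.
Proof. intros Ht. apply is_derive_unique, half_curve_is_derive, Ht. Qed.

Lemma half_curve_C2 t : I t ->
  ex_derive half_curve t /\ ex_derive (Derive half_curve) t /\ continuous (Derive (Derive half_curve)) t.
Proof.
  apply (C2_of_derivative I half_curve (fun s => (Derive C s + sg * M s) / 2)).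
  - intros s Hs. apply in_interval_locally, Hs.
  - exact half_curve_is_derive.
  - intros s Hs. apply analytic_at_C1.
    apply (analytic_at_ext (fun s => / 2 * Derive C s + sg / 2 * M s)); [intros; field|].
    apply analytic_at_lin; [apply analytic_at_Derive, HC | apply HM]; exact Hs.
Qed.

Lemma half_curve_C1 t : I t -> ex_derive half_curve t /\ continuous (Derive half_curve) t.
Proof.
  intros Ht. destruct (half_curve_C2 t Ht) as [D1 [D2 _]].
  split; [exact D1 | apply ex_derive_continuous_R, D2].
Qed.

End HalfCurve.

Let cx t := vx (c t). Let cy t := vy (c t). Let cz t := vz (c t).
Let mx t := vx (m t). Let my t := vy (m t). Let mz t := vz (m t).

(* The two null curves alpha (sign +1) and beta (sign -1), coordinatewise: c' = alpha' + beta'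
   and the normal-tangent vector m = n x c' = alpha' - beta'. *)
Let alx := half_curve cx mx 1. Let aly := half_curve cy my 1. Let alz := half_curve cz mz 1.
Let bex := half_curve cx mx (-1). Let bey := half_curve cy my (-1). Let bez := half_curve cz mz (-1).

Lemma coordinates_analytic :
  analytic_on I cx /\ analytic_on I cy /\ analytic_on I cz /\
  analytic_on I mx /\ analytic_on I my /\ analytic_on I mz.
Proof. destruct hc_an as [? [? ?]]. destruct normal_tangent_analytic as [? [? ?]]. repeat split; assumption. Qed.

Lemma null_curves_C2_ball t0 R0 : (forall u, Rabs (u - t0) < R0 -> I u) ->
  C2_ball alx t0 R0 /\ C2_ball aly t0 R0 /\ C2_ball alz t0 R0 /\
  C2_ball bex t0 R0 /\ C2_ball bey t0 R0 /\ C2_ball bez t0 R0.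
Proof.
  intros HI. destruct coordinates_analytic as [Cx [Cy [Cz [Mx [My Mz]]]]].
  split; [|split; [|split; [|split; [|split]]]]; intros u Hu; apply half_curve_C2; auto.
Qed.

Lemma null_curves_Derive u : I u ->
  Derive alx u = (vx (dcurve c u) + 1 * mx u) / 2 /\ Derive aly u = (vy (dcurve c u) + 1 * my u) / 2 /\
  Derive alz u = (vz (dcurve c u) + 1 * mz u) / 2 /\ Derive bex u = (vx (dcurve c u) + -1 * mx u) / 2 /\
  Derive bey u = (vy (dcurve c u) + -1 * my u) / 2 /\ Derive bez u = (vz (dcurve c u) + -1 * mz u) / 2.
Proof.
  intros Hu. destruct coordinates_analytic as [Cx [Cy [Cz [Mx [My Mz]]]]].
  repeat split; apply half_curve_Derive; auto.
Qed.

Lemma null_curves_null u : I u ->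
  (Derive alx u) ^ 2 + (Derive aly u) ^ 2 - (Derive alz u) ^ 2 = 0 /\
  (Derive bex u) ^ 2 + (Derive bey u) ^ 2 - (Derive bez u) ^ 2 = 0.
Proof.
  intros Hu. destruct (null_curves_Derive u Hu) as [-> [-> [-> [-> [-> ->]]]]].
  split; apply lcross_null_half_sum; auto; ring.
Qed.

Definition null_translation u w := mk3 (alx u + bex w) (aly u + bey w) (alz u + bez w).

Definition local_chart t0 rho := 0 < rho /\ (forall u, Rabs (u - t0) < rho -> I u) /\
  (((forall u w, Rabs (u - t0) < rho -> Rabs (w - t0) < rho ->
       Derive aly u * Derive bez w - Derive bey w * Derive alz u <> 0) /\
    exists D psi, BI_soliton D psi /\ forall u w, Rabs (u - t0) < rho -> Rabs (w - t0) < rho ->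
       on_graph_x D psi (null_translation u w)) \/
   ((forall u w, Rabs (u - t0) < rho -> Rabs (w - t0) < rho ->
       Derive alx u * Derive bez w - Derive bex w * Derive alz u <> 0) /\
    exists D psi, BI_soliton D psi /\ forall u w, Rabs (u - t0) < rho -> Rabs (w - t0) < rho ->
       on_graph_y D psi (null_translation u w))).

Lemma local_chart_exists t0 : I t0 -> exists rho, local_chart t0 rho.
Proof.
  intros Ht0. destruct (in_interval_ball a b t0 Ht0) as [R0 [HR0 HI]].
  destruct (null_curves_C2_ball t0 R0 HI) as [Cax [Cay [Caz [Cbx [Cby Cbz]]]]].
  pose proof (fun u Hu => null_curves_null u (HI u Hu)) as Hnull.
  assert (Hv : lprod (dcurve c t0) (dcurve c t0) <> 0)
    by (destruct hc_type as [H|H]; specialize (H t0 Ht0); lra).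
  destruct (null_curves_Derive t0 Ht0) as [E1 [E2 [E3 [E4 [E5 E6]]]]].
  destruct (lcross_projection_nondegenerate (n t0) (dcurve c t0) (hn_unit t0 Ht0) (hn_orth t0 Ht0) Hv)
    as [P|P].
  - destruct (null_translation_local_graph t0 R0 aly alz alx bey bez bex HR0 Cay Caz Cax Cby Cbz Cbx)
      as [r [Hr [Hdet [D [psi [HBI HG]]]]]].
    + intros u Hu. destruct (Hnull u Hu). lra.
    + intros u Hu. destruct (Hnull u Hu). lra.
    + rewrite E2, E3, E5, E6. unfold my, mz, m. intro Z. apply P. lra.
    + exists (Rmin r R0). pose proof (Rmin_l r R0). pose proof (Rmin_r r R0).
      split; [apply Rmin_pos; auto|]. split; [intros u Hu; apply HI; lra|].
      left. split; [intros u w Hu Hw; apply Hdet; lra|].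
      exists D, psi. split; auto. intros u w Hu Hw. apply (HG u w); lra.
  - destruct (null_translation_local_graph t0 R0 alx alz aly bex bez bey HR0 Cax Caz Cay Cbx Cbz Cby)
      as [r [Hr [Hdet [D [psi [HBI HG]]]]]].
    + intros u Hu. destruct (Hnull u Hu). lra.
    + intros u Hu. destruct (Hnull u Hu). lra.
    + rewrite E1, E3, E4, E6. unfold mx, mz, m. intro Z. apply P. lra.
    + exists (Rmin r R0). pose proof (Rmin_l r R0). pose proof (Rmin_r r R0).
      split; [apply Rmin_pos; auto|]. split; [intros u Hu; apply HI; lra|].
      right. split; [intros u w Hu Hw; apply Hdet; lra|].
      exists D, psi. split; auto. intros u w Hu Hw. apply (HG u w); lra.
Qed.

Definition bjorling_domain s t := exists t0 rho,
  I t0 /\ local_chart t0 rho /\ Rabs (s - t0) < rho / 2 /\ Rabs t < rho / 2.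

Definition bjorling_surface s t := null_translation (s + t) (s - t).

Lemma bjorling_domain_open : open2 bjorling_domain.
Proof.
  intros s t [t0 [rho [H0 [HG [H1 H2]]]]].
  exists (Rmin (rho / 2 - Rabs (s - t0)) (rho / 2 - Rabs t)). split; [apply Rmin_pos; lra|].
  intros s' t' h1 h2. pose proof (Rmin_l (rho / 2 - Rabs (s - t0)) (rho / 2 - Rabs t)).
  pose proof (Rmin_r (rho / 2 - Rabs (s - t0)) (rho / 2 - Rabs t)).
  exists t0, rho. do 2 (split; [assumption|]). split.
  - replace (rho / 2) with (rho / 2 - Rabs (s - t0) + Rabs (s - t0)) by ring.
    apply Rabs_shift_lt with s; lra.
  - replace (rho / 2) with (rho / 2 - Rabs t + Rabs (t - 0)) by (rewrite Rminus_0_r; ring).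
    replace t' with (t' - 0) by ring. apply Rabs_shift_lt with t; lra.
Qed.

Lemma bjorling_domain_interval s t : bjorling_domain s t -> I (s + t) /\ I (s - t).
Proof.
  intros [t0 [rho [_ [[_ [HI _]] [H1 H2]]]]].
  destruct (Rabs_sum_diff_lt s t t0 rho H1 H2). split; apply HI; assumption.
Qed.

Lemma bjorling_domain_axis t : I t -> bjorling_domain t 0.
Proof.
  intros Ht. destruct (local_chart_exists t Ht) as [rho Hrho]. exists t, rho.
  pose proof (proj1 Hrho). do 2 (split; [assumption|]). rewrite Rminus_eq_0, Rabs_R0. lra.
Qed.

Lemma bjorling_coordinate_C1 C M : analytic_on I C -> analytic_on I M ->
  C1_on bjorling_domain (fun s t => half_curve C M 1 (s + t) + half_curve C M (-1) (s - t)) /\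
  (forall s t, bjorling_domain s t ->
     pu (fun s t => half_curve C M 1 (s + t) + half_curve C M (-1) (s - t)) s t =
       Derive (half_curve C M 1) (s + t) + Derive (half_curve C M (-1)) (s - t) /\
     pv (fun s t => half_curve C M 1 (s + t) + half_curve C M (-1) (s - t)) s t =
       Derive (half_curve C M 1) (s + t) - Derive (half_curve C M (-1)) (s - t)).
Proof.
  intros HC HM. apply (translation_surface_C1 I); auto using bjorling_domain_open, bjorling_domain_interval;
    apply half_curve_C1; assumption.
Qed.

Lemma bjorling_surface_C1 :
  C1_on bjorling_domain (fun s t => vx (bjorling_surface s t)) /\
  C1_on bjorling_domain (fun s t => vy (bjorling_surface s t)) /\
  C1_on bjorling_domain (fun s t => vz (bjorling_surface s t)).
Proof.
  destruct coordinates_analytic as [Cx [Cy [Cz [Mx [My Mz]]]]].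
  split; [|split]; apply bjorling_coordinate_C1; assumption.
Qed.

Lemma bjorling_partials s t : bjorling_domain s t ->
  Xu bjorling_surface s t = mk3 (Derive alx (s + t) + Derive bex (s - t))
    (Derive aly (s + t) + Derive bey (s - t)) (Derive alz (s + t) + Derive bez (s - t)) /\
  Xv bjorling_surface s t = mk3 (Derive alx (s + t) - Derive bex (s - t))
    (Derive aly (s + t) - Derive bey (s - t)) (Derive alz (s + t) - Derive bez (s - t)).
Proof.
  intros H. destruct coordinates_analytic as [Cx [Cy [Cz [Mx [My Mz]]]]].
  destruct (proj2 (bjorling_coordinate_C1 cx mx Cx Mx) s t H) as [X1 X2].
  destruct (proj2 (bjorling_coordinate_C1 cy my Cy My) s t H) as [Y1 Y2].
  destruct (proj2 (bjorling_coordinate_C1 cz mz Cz Mz) s t H) as [Z1 Z2].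
  unfold Xu, Xv. split; f_equal; [exact X1 | exact Y1 | exact Z1 | exact X2 | exact Y2 | exact Z2].
Qed.

Lemma bjorling_surface_regular : regular_surface bjorling_domain bjorling_surface.
Proof.
  destruct bjorling_surface_C1 as [Cx [Cy Cz]].
  split; [exact bjorling_domain_open | split; [exact Cx | split; [exact Cy | split; [exact Cz|]]]].
  intros s t H al be E1 E2 E3.
  destruct (bjorling_partials s t H) as [EU EV]. rewrite EU, EV in E1, E2, E3.
  unfold vx, vy, vz, mk3 in E1, E2, E3; simpl in E1, E2, E3.
  destruct H as [t0 [rho [_ [[_ [_ HG]] [H1 H2]]]]].
  destruct (Rabs_sum_diff_lt s t t0 rho H1 H2) as [U W].
  destruct HG as [[Hdet _] | [Hdet _]]; specialize (Hdet _ _ U W);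
    [ destruct (det2_kernel _ _ _ _ (al + be) (al - be) Hdet)
    | destruct (det2_kernel _ _ _ _ (al + be) (al - be) Hdet) ]; lra.
Qed.

Lemma bjorling_surface_BI : BI_general_surface bjorling_domain bjorling_surface.
Proof.
  split; [exact bjorling_surface_regular|].
  intros s t [t0 [rho [H0 [[Hr [HI HG]] [H1 H2]]]]].
  pose proof (Rmin_l (rho / 2 - Rabs (s - t0)) (rho / 2 - Rabs t)).
  pose proof (Rmin_r (rho / 2 - Rabs (s - t0)) (rho / 2 - Rabs t)).
  set (e := Rmin (rho / 2 - Rabs (s - t0)) (rho / 2 - Rabs t)) in *.
  exists e. split; [apply Rmin_pos; lra|].
  assert (Hn : forall s' t', Rabs (s' - s) < e -> Rabs (t' - t) < e ->
      Rabs (s' + t' - t0) < rho /\ Rabs (s' - t' - t0) < rho).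
  { intros s' t' h1 h2. apply Rabs_sum_diff_lt.
    - replace (rho / 2) with (rho / 2 - Rabs (s - t0) + Rabs (s - t0)) by ring.
      apply Rabs_shift_lt with s; lra.
    - replace (rho / 2) with (rho / 2 - Rabs t + Rabs (t - 0)) by (rewrite Rminus_0_r; ring).
      replace t' with (t' - 0) by ring. apply Rabs_shift_lt with t; lra. }
  destruct HG as [[_ [D [psi [HBI HGr]]]] | [_ [D [psi [HBI HGr]]]]]; exists D, psi; split; auto;
    [left | right; left]; intros s' t' [_ [h1 h2]]; destruct (Hn s' t' h1 h2); apply HGr; auto.
Qed.

Lemma bjorling_surface_axis t : bjorling_surface t 0 = c t.
Proof.
  unfold bjorling_surface, null_translation, alx, aly, alz, bex, bey, bez, half_curve.
  rewrite Rplus_0_r, Rminus_0_r. unfold cx, cy, cz.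
  destruct (c t) as [[p q] r]. unfold mk3, vx, vy, vz; simpl. f_equal; [f_equal|]; field.
Qed.

Lemma bjorling_axis_partials t : I t ->
  Xu bjorling_surface t 0 = dcurve c t /\ Xv bjorling_surface t 0 = m t.
Proof.
  intros Ht. destruct (bjorling_partials t 0 (bjorling_domain_axis t Ht)) as [-> ->].
  rewrite Rplus_0_r, Rminus_0_r.
  destruct (null_curves_Derive t Ht) as [-> [-> [-> [-> [-> ->]]]]].
  unfold mx, my, mz. destruct (dcurve c t) as [[p q] r], (m t) as [[p' q'] r'].
  unfold mk3, vx, vy, vz; simpl. split; f_equal; [f_equal | | f_equal |]; field.
Qed.

Lemma bjorling_surface_normal t : I t -> unit_normal_at bjorling_surface t 0 (n t).
Proof.
  intros Ht. destruct (bjorling_axis_partials t Ht) as [Eu Ev].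
  unfold unit_normal_at. rewrite Eu, Ev. unfold m.
  split; [apply hn_unit, Ht | split; [apply hn_orth, Ht | apply (proj1 (lcross_orthogonal _ _))]].
Qed.

End Bjorling.

Theorem corollary2p1 (a b : Rbar) (hab : Rbar_lt a b)
  (c n : R -> V3)
  (hc_an : analytic_curve (in_interval a b) c)
  (hc_reg : forall t, in_interval a b t -> dcurve c t <> mk3 0 0 0)
  (hc_type : (forall t, in_interval a b t -> 0 < lprod (dcurve c t) (dcurve c t)) \/
             (forall t, in_interval a b t -> lprod (dcurve c t) (dcurve c t) < 0))
  (hn_an : analytic_curve (in_interval a b) n)
  (hn_unit : forall t, in_interval a b t -> lprod (n t) (n t) = 1)
  (hn_orth : forall t, in_interval a b t -> lprod (n t) (dcurve c t) = 0) :
  exists (O : R -> R -> Prop) (X : R -> R -> V3),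
    (forall t, in_interval a b t -> O t 0) /\
    BI_general_surface O X /\
    (forall t, in_interval a b t -> X t 0 = c t /\ unit_normal_at X t 0 (n t)).
Proof.
  destruct (in_interval_inhabited a b hab) as [ts Hts].
  exists (bjorling_domain a b c n ts), (bjorling_surface c n ts). split; [|split].
  - intros t Ht. apply bjorling_domain_axis; assumption.
  - apply bjorling_surface_BI; assumption.
  - intros t Ht. split.
    + apply bjorling_surface_axis.
    + apply (bjorling_surface_normal a b); assumption.
Qed.
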